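(* Let $a>1$, $m>0$, and let $(g,\phi)$ be a quasi-Einstein metric on $\mathbb{C}P^2\sharp2\overline{\mathbb{C}P}^2$ with $g=e^{2\sigma}g_K$, where $g_K$ is a $\mathbb{T}^2\times\mathbb{Z}_2$-invariant toric Kähler metric on the pentagon $P$ (notation as in the context), $t=x_1+x_2$, and $$\sigma=-\log(bt+c),\qquad \phi=-m\log\left(\frac{dbt+dc+1}{bt+c}\right)$$ for constants $b,c,d$ with $bt+c>0$ and $dbt+dc+1>0$ on $\overline P$. Let $\mu$ be a constant such that $1-\frac1m\big(\Delta_g\phi-|\nabla\phi|_g^2\big)=\mu\,e^{2\phi/m}$ on the manifold. Then $$\frac{4b}{(c-2b)(dc+1-2db)}=\frac{1}{(c-2b)^2}-\frac{\mu}{(dc+1-2db)^2},$$ $$0=\frac{1}{(c+(a-2)b)^2}-\frac{\mu}{(dc+1+(a-2)db)^2},$$ $$\frac{-2b}{(c+(a-1)b)(dc+1+(a-1)db)}=\frac{1}{(c+(a-1)b)^2}-\frac{\mu}{(dc+1+(a-1)db)^2},$$ and $$\int_P\Big(e^{-\phi}-\mu\,e^{\left(\frac2m-1\right)\phi}\Big)e^{4\sigma}\,dx=0,$$ where $dx=dx_1dx_2$ is Lebesgue measure on $P$.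
   Context: A quasi-Einstein metric satisfies $\mathrm{Ric}(g)+\nabla^2\phi-\frac1m d\phi\otimes d\phi=\lambda g$ for a smooth function $\phi$ and constants $\lambda$, $m>0$; $\Delta=\mathrm{tr}\,\nabla^2$ denotes the analyst's Laplacian. The moment polytope of $\mathbb{C}P^2\sharp2\overline{\mathbb{C}P}^2$ is the pentagon $P=\{l_i>0\}$, $l_1=1+x_1$, $l_2=1+x_2$, $l_3=a-1-x_1$, $l_4=a-1-x_2$, $l_5=a-1-x_1-x_2$, with vertices including $(-1,-1)$, $(-1,a-1)$, $(0,a-1)$. A $\mathbb{T}^2\times\mathbb{Z}_2$-invariant toric Kähler metric is, on $P^\circ\times\mathbb{T}^2$, $g_K=u_{ij}dx_idx_j+u^{ij}d\theta_id\theta_j$ with $u=\frac12(\sum_{i=1}^5 l_i\log l_i+f)$, $f$ smooth up to $\partial P$ and symmetric under $x_1\leftrightarrow x_2$, $(u^{ij})=(D^2u)^{-1}$; its volume form is a constant multiple of $dx_1dx_2\,d\theta_1d\theta_2$. *)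

From Stdlib Require Import Reals Lra List.
Import ListNotations.
From Coquelicot Require Import Coquelicot.
Open Scope R_scope.

Definition pt := (R * R)%type.

Definition d1 (F : pt -> R) : pt -> R :=
  fun p => Derive (fun s => F (s, snd p)) (fst p).
Definition d2 (F : pt -> R) : pt -> R :=
  fun p => Derive (fun s => F (fst p, s)) (snd p).

Fixpoint iter_pd (w : list bool) (F : pt -> R) : pt -> R :=
  match w with
  | nil => F
  | true :: w' => d1 (iter_pd w' F)
  | false :: w' => d2 (iter_pd w' F)
  end.

Definition smooth_on (U : pt -> Prop) (F : pt -> R) : Prop :=
  forall (w : list bool) (p : pt), U p ->
    continuous (iter_pd w F) p /\
    ex_derive (fun s => iter_pd w F (s, snd p)) (fst p) /\
    ex_derive (fun s => iter_pd w F (fst p, s)) (snd p).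

(** "F is smooth up to the boundary of the closed set K":
    F is smooth on some open neighbourhood of K. *)
Definition smooth_up_to (K : pt -> Prop) (F : pt -> R) : Prop :=
  exists U : pt -> Prop, open U /\ (forall p, K p -> U p) /\ smooth_on U F.

(** The pentagon of CP^2 # 2 (-CP^2). *)
Definition l1 (p : pt) : R := 1 + fst p.
Definition l2 (p : pt) : R := 1 + snd p.
Definition l3 (a : R) (p : pt) : R := a - 1 - fst p.
Definition l4 (a : R) (p : pt) : R := a - 1 - snd p.
Definition l5 (a : R) (p : pt) : R := a - 1 - fst p - snd p.

Definition inP (a : R) (p : pt) : Prop :=
  0 < l1 p /\ 0 < l2 p /\ 0 < l3 a p /\ 0 < l4 a p /\ 0 < l5 a p.
Definition closedP (a : R) (p : pt) : Prop :=
  0 <= l1 p /\ 0 <= l2 p /\ 0 <= l3 a p /\ 0 <= l4 a p /\ 0 <= l5 a p.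

Definition lprod (a : R) (p : pt) : R := l1 p * l2 p * l3 a p * l4 a p * l5 a p.

Definition potential (a : R) (f : pt -> R) (p : pt) : R :=
  / 2 * (l1 p * ln (l1 p) + l2 p * ln (l2 p) + l3 a p * ln (l3 a p)
         + l4 a p * ln (l4 a p) + l5 a p * ln (l5 a p) + f p).

Definition u11 a f := d1 (d1 (potential a f)).
Definition u12 a f := d1 (d2 (potential a f)).
Definition u22 a f := d2 (d2 (potential a f)).
Definition detH a f (p : pt) : R := u11 a f p * u22 a f p - u12 a f p * u12 a f p.
Definition uinv11 a f (p : pt) : R := u22 a f p / detH a f p.
Definition uinv12 a f (p : pt) : R := - u12 a f p / detH a f p.
Definition uinv22 a f (p : pt) : R := u11 a f p / detH a f p.

(** Coordinates on P° x T^2: index 0,1 = x1,x2 ; index 2,3 = theta1,theta2.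
    All quantities are T^2-invariant, so theta-derivatives vanish. *)
Definition pd (i : nat) (F : pt -> R) : pt -> R :=
  match i with
  | 0%nat => d1 F
  | 1%nat => d2 F
  | _ => fun _ => 0
  end.

Definition sum4 (F : nat -> R) : R := F 0%nat + F 1%nat + F 2%nat + F 3%nat.

Definition gK (a : R) (f : pt -> R) (i j : nat) (p : pt) : R :=
  match i, j with
  | 0%nat, 0%nat => u11 a f p
  | 0%nat, 1%nat | 1%nat, 0%nat => u12 a f p
  | 1%nat, 1%nat => u22 a f p
  | 2%nat, 2%nat => uinv11 a f p
  | 2%nat, 3%nat | 3%nat, 2%nat => uinv12 a f p
  | 3%nat, 3%nat => uinv22 a f p
  | _, _ => 0
  end.
Definition gKinv (a : R) (f : pt -> R) (i j : nat) (p : pt) : R :=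
  match i, j with
  | 0%nat, 0%nat => uinv11 a f p
  | 0%nat, 1%nat | 1%nat, 0%nat => uinv12 a f p
  | 1%nat, 1%nat => uinv22 a f p
  | 2%nat, 2%nat => u11 a f p
  | 2%nat, 3%nat | 3%nat, 2%nat => u12 a f p
  | 3%nat, 3%nat => u22 a f p
  | _, _ => 0
  end.

Definition confg (s : pt -> R) (G : nat -> nat -> pt -> R) (i j : nat) (p : pt) : R :=
  exp (2 * s p) * G i j p.
Definition confginv (s : pt -> R) (Gi : nat -> nat -> pt -> R) (i j : nat) (p : pt) : R :=
  exp (- (2 * s p)) * Gi i j p.

Definition christoffel (G Gi : nat -> nat -> pt -> R) (c i j : nat) (p : pt) : R :=
  / 2 * sum4 (fun k => Gi c k p *
        (pd i (G k j) p + pd j (G k i) p - pd k (G i j) p)).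

Definition ricci (G Gi : nat -> nat -> pt -> R) (i j : nat) (p : pt) : R :=
  sum4 (fun c => pd c (christoffel G Gi c i j) p)
  - pd j (fun q => sum4 (fun c => christoffel G Gi c i c q)) p
  + sum4 (fun c => sum4 (fun k =>
        christoffel G Gi c c k p * christoffel G Gi k i j p
        - christoffel G Gi c j k p * christoffel G Gi k i c p)).

Definition hessian (G Gi : nat -> nat -> pt -> R) (F : pt -> R) (i j : nat) (p : pt) : R :=
  pd i (pd j F) p - sum4 (fun c => christoffel G Gi c i j p * pd c F p).

(** Analyst's Laplacian = trace of the Hessian; squared gradient norm. *)
Definition laplacian (G Gi : nat -> nat -> pt -> R) (F : pt -> R) (p : pt) : R :=
  sum4 (fun i => sum4 (fun j => Gi i j p * hessian G Gi F i j p)).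
Definition gradsq (Gi : nat -> nat -> pt -> R) (F : pt -> R) (p : pt) : R :=
  sum4 (fun i => sum4 (fun j => Gi i j p * pd i F p * pd j F p)).

Definition quasi_einstein_on (D : pt -> Prop) (G Gi : nat -> nat -> pt -> R)
    (phi : pt -> R) (lam m : R) : Prop :=
  forall (p : pt) (i j : nat), D p -> (i < 4)%nat -> (j < 4)%nat ->
    ricci G Gi i j p + hessian G Gi phi i j p - / m * pd i phi p * pd j phi p
    = lam * G i j p.

Definition tcoord (p : pt) : R := fst p + snd p.
Definition sigma_ans (b c : R) (p : pt) : R := - ln (b * tcoord p + c).
Definition phi_ans (m b c d : R) (p : pt) : R :=
  - m * ln ((d * b * tcoord p + d * c + 1) / (b * tcoord p + c)).

(** Write [u^ij = delta * adjij], where the [adjij] are polynomials in the [l_i] and the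
    second derivatives of [f], hence continuous on the closed pentagon.  Since [sigma] and
    [phi] depend only on [t = x1 + x2], the [mu]-equation becomes a polynomial identity in
    [delta], the [adjij] and their first derivatives, with coefficients in
    [B = e^(-sigma) = b t + c] and [D = B e^(-phi/m) = d b t + d c + 1].  This identity and
    [delta * lprod * det (D^2 u) = 1] hold inside [P], hence by continuity at the vertices,
    where the [l_i] of the two edges through the vertex vanish and the three relations
    remain.  Moreover the [mu]-equation says that the integrand is the divergence of
    [b D^(m-1) B^(-m-3) (u^11 + u^12, u^12 + u^22)], a field tangent to every edge of [P];
    integrating over vertical fibres gives [0]. *)

From Stdlib Require Import Reals Lra Lia List.
From Coquelicot Require Import Coquelicot.
Import ListNotations.
Open Scope R_scope.

Section RealContinuity.
Context {U : UniformSpace}.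

Lemma continuous_Rplus (F G : U -> R) x : continuous F x -> continuous G x ->
  continuous (fun q => F q + G q) x.
Proof. intros; apply (continuous_plus F G); auto. Qed.

Lemma continuous_Ropp (F : U -> R) x : continuous F x -> continuous (fun q => - F q) x.
Proof. intros; apply (continuous_opp F); auto. Qed.

Lemma continuous_Rminus (F G : U -> R) x : continuous F x -> continuous G x ->
  continuous (fun q => F q - G q) x.
Proof. intros; apply continuous_Rplus; auto; apply continuous_Ropp; auto. Qed.

Lemma continuous_Rmult (F G : U -> R) x : continuous F x -> continuous G x ->
  continuous (fun q => F q * G q) x.
Proof. intros; apply (continuous_mult F G); auto. Qed.

Lemma continuous_Rpow (F : U -> R) n x : continuous F x -> continuous (fun q => F q ^ n) x.
Proof.
  intros HF; induction n as [|n IH]; simpl.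
  - apply continuous_const.
  - apply (continuous_Rmult F (fun q => F q ^ n)); auto.
Qed.

Lemma continuous_Rdiv (F G : U -> R) x : continuous F x -> continuous G x -> G x <> 0 ->
  continuous (fun q => F q / G q) x.
Proof.
  intros HF HG HG0; apply (continuous_Rmult F (fun q => / G q)); auto.
  apply (continuous_comp G Rinv); auto; apply continuous_Rinv; auto.
Qed.

Lemma continuous_exp_comp (F : U -> R) x : continuous F x -> continuous (fun q => exp (F q)) x.
Proof. intros; apply (continuous_comp F exp); auto; apply continuous_exp. Qed.

Lemma continuous_ln_comp (F : U -> R) x : continuous F x -> 0 < F x ->
  continuous (fun q => ln (F q)) x.
Proof. intros; apply (continuous_comp F ln); auto; apply continuous_ln; auto. Qed.

End RealContinuity.

Lemma continuous_fst_pt (p : pt) : continuous (fun q : pt => fst q) p.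
Proof. destruct p; apply continuous_fst. Qed.

Lemma continuous_snd_pt (p : pt) : continuous (fun q : pt => snd q) p.
Proof. destruct p; apply continuous_snd. Qed.

Ltac continuity_step :=
  match goal with
  | |- continuous (fun q => @?A q + @?B q) _ => apply (continuous_Rplus A B)
  | |- continuous (fun q => @?A q - @?B q) _ => apply (continuous_Rminus A B)
  | |- continuous (fun q => @?A q * @?B q) _ => apply (continuous_Rmult A B)
  | |- continuous (fun q => @?A q / @?B q) _ => apply (continuous_Rdiv A B)
  | |- continuous (fun q => - @?A q) _ => apply (continuous_Ropp A)
  | |- continuous (fun q => @?A q ^ _) _ => apply (continuous_Rpow A)
  | |- continuous (fun q => exp (@?A q)) _ => apply (continuous_exp_comp A)
  | |- continuous (fun q => ln (@?A q)) _ => apply (continuous_ln_comp A)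
  | |- continuous (fun q => fst q) _ => apply continuous_fst_pt
  | |- continuous (fun q => snd q) _ => apply continuous_snd_pt
  | |- continuous (fun _ => ?c) _ => apply (continuous_const c)
  end.

Lemma ball_R_Rabs (x y e : R) : ball x e y <-> Rabs (y - x) < e.
Proof. reflexivity. Qed.

Lemma locally_R_Rabs (x : R) (P : R -> Prop) :
  (exists eps : posreal, forall y, Rabs (y - x) < eps -> P y) -> locally x P.
Proof. intros [e He]; exists e; exact He. Qed.

Lemma locally_pt_box (P : pt -> Prop) x y :
  locally (x, y) P <->
  exists r : posreal, forall u v, Rabs (u - x) < r -> Rabs (v - y) < r -> P (u, v).
Proof.
  split.
  - intros [e He]; exists e; intros u v Hu Hv; apply He; split; assumption.
  - intros [e He]; exists e; intros [u v] [Hu Hv]; apply He; assumption.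
Qed.

Lemma locally_line1 (P : pt -> Prop) x y : locally (x, y) P -> locally x (fun s => P (s, y)).
Proof.
  intros [r Hr]%locally_pt_box; apply locally_R_Rabs; exists r; intros s Hs.
  apply Hr; auto; rewrite Rminus_eq_0, Rabs_R0; apply cond_pos.
Qed.

Lemma locally_line2 (P : pt -> Prop) x y : locally (x, y) P -> locally y (fun s => P (x, s)).
Proof.
  intros [r Hr]%locally_pt_box; apply locally_R_Rabs; exists r; intros s Hs.
  apply Hr; auto; rewrite Rminus_eq_0, Rabs_R0; apply cond_pos.
Qed.

Definition partials_exist (F : pt -> R) (p : pt) : Prop :=
  ex_derive (fun s => F (s, snd p)) (fst p) /\ ex_derive (fun s => F (fst p, s)) (snd p).

Lemma partials_exist_ext (F G : pt -> R) p :
  locally p (fun q => F q = G q) -> partials_exist G p -> partials_exist F p.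
Proof.
  destruct p as [x y]; intros Hloc [H1 H2]; split; simpl.
  - apply (ex_derive_ext_loc (fun s => G (s, y))); auto.
    generalize (locally_line1 _ x y Hloc); apply filter_imp; auto.
  - apply (ex_derive_ext_loc (fun s => G (x, s))); auto.
    generalize (locally_line2 _ x y Hloc); apply filter_imp; auto.
Qed.

Lemma pd_ext (F G : pt -> R) i p :
  locally p (fun q => F q = G q) -> pd i F p = pd i G p.
Proof.
  destruct p as [x y]; intros Hloc; destruct i as [|[|i]]; simpl; unfold d1, d2; simpl;
    auto; apply Derive_ext_loc.
  - exact (locally_line1 _ x y Hloc).
  - exact (locally_line2 _ x y Hloc).
Qed.

Lemma partials_exist_const c p : partials_exist (fun _ => c) p.
Proof. split; apply ex_derive_const. Qed.

Lemma partials_exist_plus (F G : pt -> R) p : partials_exist F p -> partials_exist G p ->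
  partials_exist (fun q => F q + G q) p.
Proof. intros [] []; split; apply (ex_derive_plus (fun s => F _) (fun s => G _)); auto. Qed.

Lemma partials_exist_opp (F : pt -> R) p : partials_exist F p ->
  partials_exist (fun q => - F q) p.
Proof. intros []; split; apply (ex_derive_opp (fun s => F _)); auto. Qed.

Lemma partials_exist_minus (F G : pt -> R) p : partials_exist F p -> partials_exist G p ->
  partials_exist (fun q => F q - G q) p.
Proof. intros [] []; split; apply (ex_derive_minus (fun s => F _) (fun s => G _)); auto. Qed.

Lemma partials_exist_mult (F G : pt -> R) p : partials_exist F p -> partials_exist G p ->
  partials_exist (fun q => F q * G q) p.
Proof. intros [] []; split; apply ex_derive_mult; auto. Qed.

Lemma partials_exist_div (F G : pt -> R) p : partials_exist F p -> partials_exist G p ->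
  G p <> 0 -> partials_exist (fun q => F q / G q) p.
Proof. destruct p; intros [] [] ?; split; apply ex_derive_div; auto. Qed.

Lemma partials_exist_exp_scal (F : pt -> R) k p : partials_exist F p ->
  partials_exist (fun q => exp (k * F q)) p.
Proof.
  intros [H1 H2]; split;
    (apply (ex_derive_comp exp); [apply ex_derive_Reals_1, derivable_pt_exp
                                 | apply ex_derive_scal; auto]).
Qed.

Lemma pd_theta n (F : pt -> R) p : pd (S (S n)) F p = 0.
Proof. reflexivity. Qed.

Lemma pd_const i c p : pd i (fun _ => c) p = 0.
Proof. destruct i as [|[|i]]; simpl; unfold d1, d2; auto; apply Derive_const. Qed.

Lemma pd_opp i (F : pt -> R) p : pd i (fun q => - F q) p = - pd i F p.
Proof.
  destruct i as [|[|i]]; simpl; unfold d1, d2; try ring; apply (Derive_opp (fun s => F _)).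
Qed.

Lemma pd_minus i (F G : pt -> R) p : partials_exist F p -> partials_exist G p ->
  pd i (fun q => F q - G q) p = pd i F p - pd i G p.
Proof.
  destruct p as [x y]; intros [] []; destruct i as [|[|i]]; simpl; unfold d1, d2; simpl;
    try ring; apply (Derive_minus (fun s => F _) (fun s => G _)); auto.
Qed.

Lemma pd_mult i (F G : pt -> R) p : partials_exist F p -> partials_exist G p ->
  pd i (fun q => F q * G q) p = pd i F p * G p + F p * pd i G p.
Proof.
  destruct p as [x y]; intros [] []; destruct i as [|[|i]]; simpl; unfold d1, d2; simpl;
    try ring; apply Derive_mult; auto.
Qed.

Lemma pd_div i (F G : pt -> R) p : partials_exist F p -> partials_exist G p -> G p <> 0 ->
  pd i (fun q => F q / G q) p = (pd i F p * G p - F p * pd i G p) / G p ^ 2.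
Proof.
  destruct p as [x y]; intros [] [] ?; destruct i as [|[|i]]; simpl; unfold d1, d2; simpl;
    try (field; auto); apply Derive_div; auto.
Qed.

Lemma pd_exp_scal i (F : pt -> R) k p : partials_exist F p ->
  pd i (fun q => exp (k * F q)) p = exp (k * F p) * (k * pd i F p).
Proof.
  destruct p as [x y]; intros [H1 H2]; destruct i as [|[|i]]; simpl; unfold d1, d2; simpl;
    try ring; rewrite Derive_comp, Derive_scal, (is_derive_unique exp _ _ (is_derive_exp _));
    try ring; try apply ex_derive_Reals_1, derivable_pt_exp; apply ex_derive_scal; auto.
Qed.

Lemma partials_exist_fst p : partials_exist (fun q => fst q) p.
Proof. split; simpl; [apply ex_derive_id | apply ex_derive_const]. Qed.

Lemma partials_exist_snd p : partials_exist (fun q => snd q) p.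
Proof. split; simpl; [apply ex_derive_const | apply ex_derive_id]. Qed.

Lemma partials_exist_inv (F : pt -> R) p : partials_exist F p -> F p <> 0 ->
  partials_exist (fun q => / F q) p.
Proof. destruct p; intros [] ?; split; apply (ex_derive_inv (fun s => F _)); auto. Qed.

Ltac partials_step :=
  match goal with
  | |- partials_exist (fun q => @?A q + @?B q) _ => apply (partials_exist_plus A B)
  | |- partials_exist (fun q => @?A q - @?B q) _ => apply (partials_exist_minus A B)
  | |- partials_exist (fun q => @?A q * @?B q) _ => apply (partials_exist_mult A B)
  | |- partials_exist (fun q => / @?A q) _ => apply (partials_exist_inv A)
  | |- partials_exist (fun q => fst q) _ => apply partials_exist_fst
  | |- partials_exist (fun q => snd q) _ => apply partials_exist_snd
  | |- partials_exist (fun _ => ?c) _ => apply (partials_exist_const c)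
  end.

Lemma smooth_on_continuous U F w p : smooth_on U F -> U p -> continuous (iter_pd w F) p.
Proof. intros Hs Hp; apply (Hs w p Hp). Qed.

Lemma smooth_on_ex_derive1 U F w x y : smooth_on U F -> U (x, y) ->
  ex_derive (fun s => iter_pd w F (s, y)) x.
Proof. intros Hs Hp; apply (Hs w (x, y) Hp). Qed.

Lemma smooth_on_ex_derive2 U F w x y : smooth_on U F -> U (x, y) ->
  ex_derive (fun s => iter_pd w F (x, s)) y.
Proof. intros Hs Hp; apply (Hs w (x, y) Hp). Qed.

Lemma smooth_up_to_continuous K F w p : smooth_up_to K F -> K p ->
  continuous (iter_pd w F) p.
Proof. intros (U & _ & HKU & Hs) Hp; apply (smooth_on_continuous U); auto. Qed.

Lemma smooth_up_to_ex_derive1 K F w x y : smooth_up_to K F -> K (x, y) ->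
  ex_derive (fun s => iter_pd w F (s, y)) x.
Proof. intros (U & _ & HKU & Hs) Hp; apply (smooth_on_ex_derive1 U); auto. Qed.

Lemma smooth_up_to_ex_derive2 K F w x y : smooth_up_to K F -> K (x, y) ->
  ex_derive (fun s => iter_pd w F (x, s)) y.
Proof. intros (U & _ & HKU & Hs) Hp; apply (smooth_on_ex_derive2 U); auto. Qed.

Lemma partials_exist_smooth K F w p : smooth_up_to K F -> K p ->
  partials_exist (iter_pd w F) p.
Proof.
  destruct p; split; [apply (smooth_up_to_ex_derive1 K) | apply (smooth_up_to_ex_derive2 K)]; auto.
Qed.

Lemma inP_closedP a p : inP a p -> closedP a p.
Proof. unfold inP, closedP; intuition lra. Qed.

Lemma inP_locally a q : inP a q -> locally q (inP a).
Proof.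
  destruct q as [x y]; unfold inP, l1, l2, l3, l4, l5; simpl; intros H.
  apply locally_pt_box.
  set (m1 := Rmin (1 + x) (1 + y)); set (m2 := Rmin (a - 1 - x) (a - 1 - y)).
  set (m := Rmin (Rmin m1 m2) (a - 1 - x - y)).
  assert (Hm : 0 < m / 2).
  { enough (0 < m) by lra; unfold m, m1, m2; repeat apply Rmin_pos; lra. }
  exists (mkposreal _ Hm); simpl; intros u v Hu%Rabs_def2 Hv%Rabs_def2.
  pose proof (Rmin_l (Rmin m1 m2) (a - 1 - x - y)); pose proof (Rmin_r (Rmin m1 m2) (a - 1 - x - y)).
  pose proof (Rmin_l m1 m2); pose proof (Rmin_r m1 m2).
  pose proof (Rmin_l (1 + x) (1 + y)); pose proof (Rmin_r (1 + x) (1 + y)).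
  pose proof (Rmin_l (a - 1 - x) (a - 1 - y)); pose proof (Rmin_r (a - 1 - x) (a - 1 - y)).
  subst m m1 m2; simpl; lra.
Qed.

Lemma inP_nonzero a q : inP a q ->
  l1 q <> 0 /\ l2 q <> 0 /\ l3 a q <> 0 /\ l4 a q <> 0 /\ l5 a q <> 0.
Proof. unfold inP; intros; repeat split; lra. Qed.

(** * The toric metric *)

Lemma is_derive_half_plus (E G : R -> R) x dE : is_derive E x dE -> ex_derive G x ->
  is_derive (fun s => / 2 * (E s + G s)) x (/ 2 * (dE + Derive G x)).
Proof.
  intros HE HG; apply (is_derive_scal (fun s => E s + G s)).
  apply (is_derive_plus E G); auto; apply Derive_correct; auto.
Qed.

Lemma pd_confg s (G : nat -> nat -> pt -> R) p :
  partials_exist s p -> (forall k j, partials_exist (G k j) p) ->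
  forall i k j, pd i (confg s G k j) p =
    exp (2 * s p) * (2 * pd i s p) * G k j p + exp (2 * s p) * pd i (G k j) p.
Proof.
  intros Hs HG i k j; unfold confg.
  rewrite (pd_mult i (fun q => exp (2 * s q)) (G k j)), (pd_exp_scal i s 2 p Hs); auto.
  apply partials_exist_exp_scal; auto.
Qed.

Section ToricMetric.

Variables (a : R) (f : pt -> R).
Hypothesis f_smooth : smooth_up_to (closedP a) f.

Lemma d1_potential x y : inP a (x, y) ->
  d1 (potential a f) (x, y) =
  / 2 * (ln (l1 (x, y)) - ln (l3 a (x, y)) - ln (l5 a (x, y)) - 1 + d1 f (x, y)).
Proof.
  unfold inP, potential, d1, l1, l2, l3, l4, l5; simpl; intros Hp.
  apply is_derive_unique, is_derive_half_plus.
  - auto_derive; [repeat split; lra | unfold Rminus in *; field; repeat split; lra].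
  - apply (smooth_up_to_ex_derive1 (closedP a) f []); auto; apply inP_closedP; exact Hp.
Qed.

Lemma d2_potential x y : inP a (x, y) ->
  d2 (potential a f) (x, y) =
  / 2 * (ln (l2 (x, y)) - ln (l4 a (x, y)) - ln (l5 a (x, y)) - 1 + d2 f (x, y)).
Proof.
  unfold inP, potential, d2, l1, l2, l3, l4, l5; simpl; intros Hp.
  apply is_derive_unique, is_derive_half_plus.
  - auto_derive; [repeat split; lra | unfold Rminus in *; field; repeat split; lra].
  - apply (smooth_up_to_ex_derive2 (closedP a) f []); auto; apply inP_closedP; exact Hp.
Qed.

Definition hess11 (q : pt) : R :=
  / 2 * (/ l1 q + / l3 a q + / l5 a q + iter_pd [true; true] f q).
Definition hess12 (q : pt) : R := / 2 * (/ l5 a q + iter_pd [true; false] f q).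
Definition hess22 (q : pt) : R :=
  / 2 * (/ l2 q + / l4 a q + / l5 a q + iter_pd [false; false] f q).

Lemma u11_hess11 p : inP a p -> u11 a f p = hess11 p.
Proof.
  intros Hp; unfold u11.
  transitivity (d1 (fun q => / 2 * (ln (l1 q) - ln (l3 a q) - ln (l5 a q) - 1 + d1 f q)) p).
  { apply (pd_ext _ _ 0); generalize (inP_locally a p Hp); apply filter_imp.
    intros [x y] Hq; apply d1_potential; exact Hq. }
  destruct p as [x y]; revert Hp; unfold inP, hess11, d1, l1, l3, l5; simpl; intros Hp.
  apply is_derive_unique, is_derive_half_plus.
  - auto_derive; [repeat split; lra | unfold Rminus in *; field; repeat split; lra].
  - apply (smooth_up_to_ex_derive1 (closedP a) f [true]); auto; apply inP_closedP; exact Hp.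
Qed.

Lemma u12_hess12 p : inP a p -> u12 a f p = hess12 p.
Proof.
  intros Hp; unfold u12.
  transitivity (d1 (fun q => / 2 * (ln (l2 q) - ln (l4 a q) - ln (l5 a q) - 1 + d2 f q)) p).
  { apply (pd_ext _ _ 0); generalize (inP_locally a p Hp); apply filter_imp.
    intros [x y] Hq; apply d2_potential; exact Hq. }
  destruct p as [x y]; revert Hp; unfold inP, hess12, d1, l2, l4, l5; simpl; intros Hp.
  apply is_derive_unique, is_derive_half_plus.
  - auto_derive; [repeat split; lra | unfold Rminus in *; field; repeat split; lra].
  - apply (smooth_up_to_ex_derive1 (closedP a) f [false]); auto; apply inP_closedP; exact Hp.
Qed.

Lemma u22_hess22 p : inP a p -> u22 a f p = hess22 p.
Proof.
  intros Hp; unfold u22.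
  transitivity (d2 (fun q => / 2 * (ln (l2 q) - ln (l4 a q) - ln (l5 a q) - 1 + d2 f q)) p).
  { apply (pd_ext _ _ 1); generalize (inP_locally a p Hp); apply filter_imp.
    intros [x y] Hq; apply d2_potential; exact Hq. }
  destruct p as [x y]; revert Hp; unfold inP, hess22, d2, l2, l4, l5; simpl; intros Hp.
  apply is_derive_unique, is_derive_half_plus.
  - auto_derive; [repeat split; lra | unfold Rminus in *; field; repeat split; lra].
  - apply (smooth_up_to_ex_derive2 (closedP a) f [false]); auto; apply inP_closedP; exact Hp.
Qed.

Lemma partials_exist_hess p : inP a p ->
  partials_exist hess11 p /\ partials_exist hess12 p /\ partials_exist hess22 p.
Proof.
  intros Hp; pose proof (inP_closedP a p Hp) as Hc.
  revert Hp; unfold inP, hess11, hess12, hess22, l1, l2, l3, l4, l5; intros Hp.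
  split; [|split]; repeat partials_step;
    match goal with
    | |- _ <> 0 => lra
    | |- partials_exist (fun q => iter_pd ?w f q) _ => apply (partials_exist_smooth (closedP a) f w); auto
    end.
Qed.

Lemma partials_exist_u p : inP a p ->
  partials_exist (u11 a f) p /\ partials_exist (u12 a f) p /\ partials_exist (u22 a f) p.
Proof.
  intros Hp; destruct (partials_exist_hess p Hp) as (H11 & H12 & H22).
  pose proof (inP_locally a p Hp) as Hloc.
  split; [|split].
  - apply (partials_exist_ext _ hess11); auto; generalize Hloc; apply filter_imp, u11_hess11.
  - apply (partials_exist_ext _ hess12); auto; generalize Hloc; apply filter_imp, u12_hess12.
  - apply (partials_exist_ext _ hess22); auto; generalize Hloc; apply filter_imp, u22_hess22.
Qed.

Lemma partials_exist_detH p : inP a p -> partials_exist (fun q => detH a f q) p.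
Proof.
  intros Hp; destruct (partials_exist_u p Hp) as (H11 & H12 & H22); unfold detH.
  apply (partials_exist_minus (fun q => u11 a f q * u22 a f q) (fun q => u12 a f q * u12 a f q));
    apply partials_exist_mult; auto.
Qed.

Lemma partials_exist_gK p : inP a p -> detH a f p <> 0 ->
  forall k j, partials_exist (gK a f k j) p.
Proof.
  intros Hp Hd k j.
  destruct (partials_exist_u p Hp) as (H11 & H12 & H22).
  pose proof (partials_exist_detH p Hp) as HD.
  assert (I11 : partials_exist (fun q => uinv11 a f q) p)
    by exact (partials_exist_div (u22 a f) _ p H22 HD Hd).
  assert (I22 : partials_exist (fun q => uinv22 a f q) p)
    by exact (partials_exist_div (u11 a f) _ p H11 HD Hd).
  assert (I12 : partials_exist (fun q => uinv12 a f q) p)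
    by exact (partials_exist_div (fun q => - u12 a f q) _ p (partials_exist_opp _ p H12) HD Hd).
  destruct k as [|[|[|[|k]]]]; destruct j as [|[|[|[|j]]]]; cbv beta iota delta [gK];
    first [assumption | apply partials_exist_const].
Qed.

Lemma pd_detH p i : inP a p ->
  pd i (fun q => detH a f q) p =
   pd i (fun q => u11 a f q) p * u22 a f p + u11 a f p * pd i (fun q => u22 a f q) p
   - (pd i (fun q => u12 a f q) p * u12 a f p + u12 a f p * pd i (fun q => u12 a f q) p).
Proof.
  intros Hp; destruct (partials_exist_u p Hp) as (H11 & H12 & H22); unfold detH.
  rewrite (pd_minus i (fun q => u11 a f q * u22 a f q) (fun q => u12 a f q * u12 a f q));
    try apply partials_exist_mult; auto.
  rewrite !pd_mult; auto.
Qed.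

Lemma pd_uinv11 p i : inP a p -> detH a f p <> 0 ->
  pd i (fun q => uinv11 a f q) p =
   (pd i (fun q => u22 a f q) p * detH a f p - u22 a f p * pd i (fun q => detH a f q) p)
    / detH a f p ^ 2.
Proof.
  intros Hp Hd; apply (pd_div i (u22 a f) (fun q => detH a f q)); auto.
  - apply (partials_exist_u p Hp).
  - apply partials_exist_detH; auto.
Qed.

Lemma pd_uinv22 p i : inP a p -> detH a f p <> 0 ->
  pd i (fun q => uinv22 a f q) p =
   (pd i (fun q => u11 a f q) p * detH a f p - u11 a f p * pd i (fun q => detH a f q) p)
    / detH a f p ^ 2.
Proof.
  intros Hp Hd; apply (pd_div i (u11 a f) (fun q => detH a f q)); auto.
  - apply (partials_exist_u p Hp).
  - apply partials_exist_detH; auto.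
Qed.

Lemma pd_uinv12 p i : inP a p -> detH a f p <> 0 ->
  pd i (fun q => uinv12 a f q) p =
   (- pd i (fun q => u12 a f q) p * detH a f p + u12 a f p * pd i (fun q => detH a f q) p)
    / detH a f p ^ 2.
Proof.
  intros Hp Hd; unfold uinv12.
  rewrite (pd_div i (fun q => - u12 a f q) (fun q => detH a f q)); auto.
  - rewrite pd_opp; change (fun q => u12 a f q) with (u12 a f); field; auto.
  - apply partials_exist_opp, (partials_exist_u p Hp).
  - apply partials_exist_detH; auto.
Qed.

(** For torus-invariant [phi], [Delta_K phi = d_i (u^ij d_j phi)]; in real dimension four
    the conformal factor adds [2 <d sigma, d phi>_K]. *)
Lemma laplacian_minus_gradsq_conformal (s phi : pt -> R) p :
  inP a p -> detH a f p <> 0 -> partials_exist s p ->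
  laplacian (confg s (gK a f)) (confginv s (gKinv a f)) phi p
  - gradsq (confginv s (gKinv a f)) phi p =
  exp (- (2 * s p)) *
  ( uinv11 a f p * pd 0 (pd 0 phi) p + uinv12 a f p * pd 0 (pd 1 phi) p
  + uinv12 a f p * pd 1 (pd 0 phi) p + uinv22 a f p * pd 1 (pd 1 phi) p
  + (pd 0 (fun q => uinv11 a f q) p + pd 1 (fun q => uinv12 a f q) p) * pd 0 phi p
  + (pd 0 (fun q => uinv12 a f q) p + pd 1 (fun q => uinv22 a f q) p) * pd 1 phi p
  + 2 * (uinv11 a f p * pd 0 s p * pd 0 phi p + uinv12 a f p * pd 0 s p * pd 1 phi p
       + uinv12 a f p * pd 1 s p * pd 0 phi p + uinv22 a f p * pd 1 s p * pd 1 phi p)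
  - (uinv11 a f p * pd 0 phi p * pd 0 phi p + 2 * uinv12 a f p * pd 0 phi p * pd 1 phi p
       + uinv22 a f p * pd 1 phi p * pd 1 phi p)).
Proof.
  intros Hp Hd Hs.
  cbv beta delta [laplacian gradsq hessian christoffel sum4].
  rewrite !(pd_confg s (gK a f) p Hs (partials_exist_gK p Hp Hd)).
  cbv beta iota delta [gK gKinv confginv].
  rewrite ?pd_theta, ?pd_const.
  rewrite !(pd_uinv11 p _ Hp Hd), !(pd_uinv12 p _ Hp Hd), !(pd_uinv22 p _ Hp Hd), !(pd_detH p _ Hp).
  unfold uinv11, uinv12, uinv22, detH in *; rewrite exp_Ropp.
  set (E := exp (2 * s p)); assert (E <> 0) by apply Rgt_not_eq, exp_pos.
  (* Naming the Hessian entries and their partials keeps [field] tractable. *)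
  set (A := u11 a f p); set (B := u12 a f p); set (C := u22 a f p).
  set (A0 := pd 0 (fun q => u11 a f q) p); set (A1 := pd 1 (fun q => u11 a f q) p).
  set (B0 := pd 0 (fun q => u12 a f q) p); set (B1 := pd 1 (fun q => u12 a f q) p).
  set (C0 := pd 0 (fun q => u22 a f q) p); set (C1 := pd 1 (fun q => u22 a f q) p).
  field; auto.
Qed.

End ToricMetric.

(** [e^(-sigma) = ansB] and [e^(-phi/m) = ansD / ansB]. *)
Definition ansB (b c : R) (q : pt) : R := b * tcoord q + c.
Definition ansD (b c d : R) (q : pt) : R := d * b * tcoord q + d * c + 1.

Definition ansatz_positive (a b c d : R) : Prop :=
  forall p : pt, closedP a p -> 0 < ansB b c p /\ 0 < ansD b c d p.

Definition dphi_ans (m b c d : R) (q : pt) : R := m * b / (ansD b c d q * ansB b c q).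

Lemma pd_sigma_ans b c p i : 0 < ansB b c p -> (i < 2)%nat ->
  pd i (sigma_ans b c) p = - b / ansB b c p.
Proof.
  destruct p as [x y]; unfold ansB, sigma_ans, tcoord; simpl; intros HB Hi.
  destruct i as [|[|i]]; [| | lia]; apply is_derive_unique; simpl;
    auto_derive; try lra; field; lra.
Qed.

Lemma partials_exist_sigma_ans b c p : 0 < ansB b c p -> partials_exist (sigma_ans b c) p.
Proof.
  destruct p as [x y]; unfold ansB, sigma_ans, tcoord; simpl; intros HB.
  split; simpl; auto_derive; lra.
Qed.

Lemma pd_phi_ans m b c d p i : 0 < ansB b c p -> 0 < ansD b c d p -> (i < 2)%nat ->
  pd i (phi_ans m b c d) p = dphi_ans m b c d p.
Proof.
  destruct p as [x y]; unfold dphi_ans, ansB, ansD, phi_ans, tcoord; simpl; intros HB HD Hi.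
  assert (0 < (d * b * (x + y) + d * c + 1) / (b * (x + y) + c)) by (apply Rdiv_lt_0_compat; lra).
  destruct i as [|[|i]]; [| | lia]; apply is_derive_unique; simpl;
    auto_derive; try (repeat split; lra); field; lra.
Qed.

Lemma pd_dphi_ans m b c d p i : 0 < ansB b c p -> 0 < ansD b c d p -> (i < 2)%nat ->
  pd i (dphi_ans m b c d) p =
  - m * b ^ 2 * (d * ansB b c p + ansD b c d p) / (ansD b c d p * ansB b c p) ^ 2.
Proof.
  destruct p as [x y]; unfold dphi_ans, ansB, ansD, tcoord; simpl; intros HB HD Hi.
  assert ((d * b * (x + y) + d * c + 1) * (b * (x + y) + c) <> 0)
    by (apply Rgt_not_eq, Rmult_lt_0_compat; lra).
  destruct i as [|[|i]]; [| | lia]; apply is_derive_unique; simpl;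
    auto_derive; auto; field; lra.
Qed.

Lemma pd_pd_phi_ans a m b c d p i j : ansatz_positive a b c d -> inP a p ->
  (i < 2)%nat -> (j < 2)%nat ->
  pd i (pd j (phi_ans m b c d)) p =
  - m * b ^ 2 * (d * ansB b c p + ansD b c d p) / (ansD b c d p * ansB b c p) ^ 2.
Proof.
  intros Hpos Hp Hi Hj.
  rewrite (pd_ext _ (dphi_ans m b c d)).
  - apply pd_dphi_ans; auto; apply Hpos, inP_closedP; exact Hp.
  - generalize (inP_locally a p Hp); apply filter_imp; intros q Hq.
    destruct (Hpos q (inP_closedP a q Hq)); apply pd_phi_ans; auto.
Qed.

Lemma exp_sigma_ans b c p : 0 < ansB b c p ->
  exp (- (2 * sigma_ans b c p)) = ansB b c p ^ 2.
Proof.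
  unfold ansB, sigma_ans; intros HB.
  replace (- (2 * - ln (b * tcoord p + c))) with (ln (b * tcoord p + c) + ln (b * tcoord p + c))
    by ring.
  rewrite exp_plus, exp_ln; auto; ring.
Qed.

Lemma exp_phi_ans m b c d p : 0 < m -> 0 < ansB b c p -> 0 < ansD b c d p ->
  exp (2 * phi_ans m b c d p / m) = ansB b c p ^ 2 / ansD b c d p ^ 2.
Proof.
  unfold ansB, ansD, phi_ans; intros Hm HB HD.
  set (L := ln ((d * b * tcoord p + d * c + 1) / (b * tcoord p + c))).
  replace (2 * (- m * L) / m) with (- (L + L)) by (field; lra).
  unfold L; rewrite exp_Ropp, exp_plus, exp_ln by (apply Rdiv_lt_0_compat; lra).
  field; lra.
Qed.

Lemma ansD_ansB b c d q : ansD b c d q = d * ansB b c q + 1.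
Proof. unfold ansD, ansB; ring. Qed.

Definition uinv_sum (a : R) (f : pt -> R) (p : pt) : R :=
  uinv11 a f p + 2 * uinv12 a f p + uinv22 a f p.

Definition uinv_div (a : R) (f : pt -> R) (p : pt) : R :=
  pd 0 (fun q => uinv11 a f q) p + pd 1 (fun q => uinv12 a f q) p
  + pd 0 (fun q => uinv12 a f q) p + pd 1 (fun q => uinv22 a f q) p.

Definition mu_equation (a : R) (f : pt -> R) (m b c d mu : R) (p : pt) : Prop :=
  1 - / m * (laplacian (confg (sigma_ans b c) (gK a f))
                       (confginv (sigma_ans b c) (gKinv a f)) (phi_ans m b c d) p
             - gradsq (confginv (sigma_ans b c) (gKinv a f)) (phi_ans m b c d) p)
  = mu * exp (2 * phi_ans m b c d p / m).

(** As [sigma] and [phi] depend on [x1 + x2] only, the [mu]-equation sees [u^ij] only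
    through [uinv_sum] and [uinv_div]. *)
Lemma mu_equation_reduced a f m b c d mu p :
  smooth_up_to (closedP a) f -> ansatz_positive a b c d -> 0 < m ->
  inP a p -> detH a f p <> 0 -> mu_equation a f m b c d mu p ->
  ansD b c d p ^ 2
  + (b ^ 2 * (d * ansB b c p + ansD b c d p) + 2 * b ^ 2 * ansD b c d p + m * b ^ 2)
    * uinv_sum a f p
  - b * ansD b c d p * ansB b c p * uinv_div a f p - mu * ansB b c p ^ 2 = 0.
Proof.
  intros Hf Hpos Hm Hp Hd Heq; unfold mu_equation in Heq.
  destruct (Hpos p (inP_closedP a p Hp)) as [HB HD].
  rewrite laplacian_minus_gradsq_conformal in Heq; auto;
    [| apply partials_exist_sigma_ans; exact HB].
  rewrite exp_sigma_ans, exp_phi_ans in Heq by auto.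
  rewrite !(pd_sigma_ans b c p), !(pd_phi_ans m b c d p), !(pd_pd_phi_ans a m b c d p) in Heq
    by (auto; lia).
  unfold uinv_sum, uinv_div, dphi_ans in *.
  rewrite ansD_ansB in *.
  set (B := ansB b c p) in *.
  assert (d * B + 1 <> 0) by lra.
  match type of Heq with ?L = ?R =>
    transitivity ((d * B + 1) ^ 2 * (L - R)); [field; split; lra | rewrite Heq; ring] end.
Qed.

(** * The inverse Hessian up to the boundary *)

(** [adjij = lprod * (cofactor of u_ij)] written without denominators, so that
    [u^ij = delta * adjij] whenever [detH * delta * lprod = 1]. *)
Definition adj11 (a : R) (f : pt -> R) (q : pt) : R :=
  / 2 * (l1 q * l3 a q * l4 a q * l5 a q + l1 q * l2 q * l3 a q * l5 a q
         + l1 q * l2 q * l3 a q * l4 a q + lprod a q * iter_pd [false; false] f q).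
Definition adj12 (a : R) (f : pt -> R) (q : pt) : R :=
  - / 2 * (l1 q * l2 q * l3 a q * l4 a q + lprod a q * iter_pd [true; false] f q).
Definition adj22 (a : R) (f : pt -> R) (q : pt) : R :=
  / 2 * (l2 q * l3 a q * l4 a q * l5 a q + l1 q * l2 q * l4 a q * l5 a q
         + l1 q * l2 q * l3 a q * l4 a q + lprod a q * iter_pd [true; true] f q).

Definition lprod_d1 (a : R) (q : pt) : R :=
  l2 q * l3 a q * l4 a q * l5 a q - l1 q * l2 q * l4 a q * l5 a q
  - l1 q * l2 q * l3 a q * l4 a q.
Definition lprod_d2 (a : R) (q : pt) : R :=
  l1 q * l3 a q * l4 a q * l5 a q - l1 q * l2 q * l3 a q * l5 a q
  - l1 q * l2 q * l3 a q * l4 a q.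

Definition adj11_d1 (a : R) (f : pt -> R) (q : pt) : R := / 2 * (
    (l3 a q * l4 a q * l5 a q - l1 q * l4 a q * l5 a q - l1 q * l3 a q * l4 a q)
  + (l2 q * l3 a q * l5 a q - l1 q * l2 q * l5 a q - l1 q * l2 q * l3 a q)
  + (l2 q * l3 a q * l4 a q - l1 q * l2 q * l4 a q)
  + (lprod_d1 a q * iter_pd [false; false] f q + lprod a q * iter_pd [true; false; false] f q)).
Definition adj12_d1 (a : R) (f : pt -> R) (q : pt) : R := - / 2 * (
    (l2 q * l3 a q * l4 a q - l1 q * l2 q * l4 a q)
  + (lprod_d1 a q * iter_pd [true; false] f q + lprod a q * iter_pd [true; true; false] f q)).
Definition adj12_d2 (a : R) (f : pt -> R) (q : pt) : R := - / 2 * (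
    (l1 q * l3 a q * l4 a q - l1 q * l2 q * l3 a q)
  + (lprod_d2 a q * iter_pd [true; false] f q + lprod a q * iter_pd [false; true; false] f q)).
Definition adj22_d2 (a : R) (f : pt -> R) (q : pt) : R := / 2 * (
    (l3 a q * l4 a q * l5 a q - l2 q * l3 a q * l5 a q - l2 q * l3 a q * l4 a q)
  + (l1 q * l4 a q * l5 a q - l1 q * l2 q * l5 a q - l1 q * l2 q * l4 a q)
  + (l1 q * l3 a q * l4 a q - l1 q * l2 q * l3 a q)
  + (lprod_d2 a q * iter_pd [true; true] f q + lprod a q * iter_pd [false; true; true] f q)).

Lemma is_derive_scal_plus_mult (E P G : R -> R) k x dE dP :
  is_derive E x dE -> is_derive P x dP -> ex_derive G x ->
  is_derive (fun s => k * (E s + P s * G s)) x (k * (dE + (dP * G x + P x * Derive G x))).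
Proof.
  intros HE HP HG; apply (is_derive_scal (fun s => E s + P s * G s)).
  apply (is_derive_plus E); auto.
  apply (is_derive_mult P G); auto; [apply Derive_correct; auto | intros; apply Rmult_comm].
Qed.

Ltac unfold_pentagon := unfold lprod, lprod_d1, lprod_d2, l1, l2, l3, l4, l5; cbn [fst snd].

Section AdjugateDerivatives.

Variables (U : pt -> Prop) (a : R) (f : pt -> R) (x y : R).
Hypotheses (f_smooth : smooth_on U f) (Uxy : U (x, y)).

Lemma is_derive_adj11_d1 : is_derive (fun s => adj11 a f (s, y)) x (adj11_d1 a f (x, y)).
Proof.
  unfold adj11, adj11_d1; unfold_pentagon.
  apply is_derive_scal_plus_mult; [auto_derive; auto; ring | auto_derive; auto; ring |].
  apply (smooth_on_ex_derive1 U); auto.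
Qed.

Lemma is_derive_adj12_d1 : is_derive (fun s => adj12 a f (s, y)) x (adj12_d1 a f (x, y)).
Proof.
  unfold adj12, adj12_d1; unfold_pentagon.
  apply is_derive_scal_plus_mult; [auto_derive; auto; ring | auto_derive; auto; ring |].
  apply (smooth_on_ex_derive1 U); auto.
Qed.

Lemma is_derive_adj12_d2 : is_derive (fun s => adj12 a f (x, s)) y (adj12_d2 a f (x, y)).
Proof.
  unfold adj12, adj12_d2; unfold_pentagon.
  apply is_derive_scal_plus_mult; [auto_derive; auto; ring | auto_derive; auto; ring |].
  apply (smooth_on_ex_derive2 U); auto.
Qed.

Lemma is_derive_adj22_d2 : is_derive (fun s => adj22 a f (x, s)) y (adj22_d2 a f (x, y)).
Proof.
  unfold adj22, adj22_d2; unfold_pentagon.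
  apply is_derive_scal_plus_mult; [auto_derive; auto; ring | auto_derive; auto; ring |].
  apply (smooth_on_ex_derive2 U); auto.
Qed.

End AdjugateDerivatives.

Definition lprod_det (a : R) (f : pt -> R) (q : pt) : R := / 4 * (
    l5 a q * (l1 q + l3 a q) * (l2 q + l4 a q)
  + l2 q * l4 a q * (l1 q + l3 a q) * (1 + l5 a q * iter_pd [false; false] f q)
  + l1 q * l3 a q * (l2 q + l4 a q) * (1 + l5 a q * iter_pd [true; true] f q)
  + l1 q * l2 q * l3 a q * l4 a q
    * (iter_pd [true; true] f q + iter_pd [false; false] f q - 2 * iter_pd [true; false] f q)
  + lprod a q * (iter_pd [true; true] f q * iter_pd [false; false] f q
                 - iter_pd [true; false] f q * iter_pd [true; false] f q)).

Definition adj_sum (a : R) (f dl : pt -> R) (q : pt) : R :=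
  dl q * (adj11 a f q + 2 * adj12 a f q + adj22 a f q).

Definition adj_div (a : R) (f dl : pt -> R) (q : pt) : R :=
  (iter_pd [true] dl q * adj11 a f q + dl q * adj11_d1 a f q)
  + (iter_pd [false] dl q * adj12 a f q + dl q * adj12_d2 a f q)
  + (iter_pd [true] dl q * adj12 a f q + dl q * adj12_d1 a f q)
  + (iter_pd [false] dl q * adj22 a f q + dl q * adj22_d2 a f q).

Lemma pd0_mult_is_derive (g P : pt -> R) (dP x y : R) :
  ex_derive (fun s => g (s, y)) x -> is_derive (fun s => P (s, y)) x dP ->
  pd 0 (fun q => g q * P q) (x, y) = iter_pd [true] g (x, y) * P (x, y) + g (x, y) * dP.
Proof.
  intros Hg HP; apply is_derive_unique; simpl.
  apply (is_derive_mult (fun s => g (s, y)) (fun s => P (s, y))); auto.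
  - apply Derive_correct; auto.
  - intros; apply Rmult_comm.
Qed.

Lemma pd1_mult_is_derive (g P : pt -> R) (dP x y : R) :
  ex_derive (fun s => g (x, s)) y -> is_derive (fun s => P (x, s)) y dP ->
  pd 1 (fun q => g q * P q) (x, y) = iter_pd [false] g (x, y) * P (x, y) + g (x, y) * dP.
Proof.
  intros Hg HP; apply is_derive_unique; simpl.
  apply (is_derive_mult (fun s => g (x, s)) (fun s => P (x, s))); auto.
  - apply Derive_correct; auto.
  - intros; apply Rmult_comm.
Qed.

Section Delta.

Variables (a : R) (f dl : pt -> R).
Hypotheses (f_smooth : smooth_up_to (closedP a) f) (dl_smooth : smooth_up_to (closedP a) dl).
Hypothesis dl_det : forall p, inP a p -> detH a f p * (dl p * lprod a p) = 1.

Lemma lprod_detH q : inP a q -> lprod a q * detH a f q = lprod_det a f q.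
Proof.
  intros Hq; destruct (inP_nonzero a q Hq) as (H1 & H2 & H3 & H4 & H5).
  unfold detH; rewrite u11_hess11, u12_hess12, u22_hess22; auto.
  unfold lprod_det, hess11, hess12, hess22, lprod; field; repeat split; auto.
Qed.

Lemma uinv_adj q : inP a q ->
  uinv11 a f q = dl q * adj11 a f q /\ uinv12 a f q = dl q * adj12 a f q /\
  uinv22 a f q = dl q * adj22 a f q.
Proof.
  intros Hq; destruct (inP_nonzero a q Hq) as (H1 & H2 & H3 & H4 & H5).
  pose proof (dl_det q Hq) as Hdet.
  assert (Hnz : dl q * lprod a q <> 0) by (intros Hz; rewrite Hz, Rmult_0_r in Hdet; lra).
  assert (dl q <> 0) by (intros Hz; apply Hnz; rewrite Hz; ring).
  assert (lprod a q <> 0) by (intros Hz; apply Hnz; rewrite Hz; ring).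
  assert (HD : detH a f q = / (dl q * lprod a q)).
  { apply (Rmult_eq_reg_r (dl q * lprod a q)); [rewrite Hdet; field; auto | exact Hnz]. }
  unfold uinv11, uinv12, uinv22; rewrite HD, u11_hess11, u12_hess12, u22_hess22; auto.
  unfold adj11, adj12, adj22, hess11, hess12, hess22, lprod in *.
  repeat split; field; repeat split; auto.
Qed.

Lemma uinv_sum_adj p : inP a p -> uinv_sum a f p = adj_sum a f dl p.
Proof.
  intros Hp; destruct (uinv_adj p Hp) as (E11 & E12 & E22).
  unfold uinv_sum, adj_sum; rewrite E11, E12, E22; ring.
Qed.

Lemma uinv_div_adj p : inP a p -> uinv_div a f p = adj_div a f dl p.
Proof.
  intros Hp; pose proof (inP_closedP a p Hp) as Hc.
  assert (Hloc : locally p (fun q => uinv11 a f q = dl q * adj11 a f q /\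
            uinv12 a f q = dl q * adj12 a f q /\ uinv22 a f q = dl q * adj22 a f q))
    by (generalize (inP_locally a p Hp); apply filter_imp, uinv_adj).
  destruct f_smooth as (U & _ & HU & Hs); destruct p as [x y].
  pose proof (smooth_up_to_ex_derive1 _ dl [] x y dl_smooth Hc) as D1.
  pose proof (smooth_up_to_ex_derive2 _ dl [] x y dl_smooth Hc) as D2.
  unfold uinv_div, adj_div.
  rewrite (pd_ext (fun q => uinv11 a f q) (fun q => dl q * adj11 a f q)),
          (pd_ext (fun q => uinv12 a f q) (fun q => dl q * adj12 a f q) 1),
          (pd_ext (fun q => uinv12 a f q) (fun q => dl q * adj12 a f q) 0),
          (pd_ext (fun q => uinv22 a f q) (fun q => dl q * adj22 a f q))
    by (generalize Hloc; apply filter_imp; intuition).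
  rewrite (pd0_mult_is_derive dl (adj11 a f) _ x y D1 (is_derive_adj11_d1 U a f x y Hs (HU _ Hc))),
    (pd1_mult_is_derive dl (adj12 a f) _ x y D2 (is_derive_adj12_d2 U a f x y Hs (HU _ Hc))),
    (pd0_mult_is_derive dl (adj12 a f) _ x y D1 (is_derive_adj12_d1 U a f x y Hs (HU _ Hc))),
    (pd1_mult_is_derive dl (adj22 a f) _ x y D2 (is_derive_adj22_d2 U a f x y Hs (HU _ Hc))).
  reflexivity.
Qed.

End Delta.

(** * Relations at the vertices *)

Definition mu_residual (a : R) (f : pt -> R) (m b c d mu : R) (dl : pt -> R) (q : pt) : R :=
  ansD b c d q ^ 2
  + (b ^ 2 * (d * ansB b c q + ansD b c d q) + 2 * b ^ 2 * ansD b c d q + m * b ^ 2)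
    * adj_sum a f dl q
  - b * ansD b c d q * ansB b c q * adj_div a f dl q - mu * ansB b c q ^ 2.

Definition det_residual (a : R) (f dl : pt -> R) (q : pt) : R := dl q * lprod_det a f q - 1.

Lemma continuous_zero_along_ray (G : pt -> R) (v w : pt) :
  continuous G v -> Rabs (fst w) <= 1 -> Rabs (snd w) <= 1 ->
  (forall eta, 0 < eta <= 1 / 2 -> G (fst v + eta * fst w, snd v + eta * snd w) = 0) ->
  G v = 0.
Proof.
  intros Hc Hw1 Hw2 H0; destruct v as [v1 v2], w as [w1 w2]; simpl in *.
  destruct (Req_dec (G (v1, v2)) 0) as [|Hne]; auto; exfalso.
  assert (Hpos : 0 < Rabs (G (v1, v2))) by (apply Rabs_pos_lt; auto).
  destruct (Hc _ (locally_ball _ (mkposreal _ Hpos))) as [r Hr].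
  set (eta := Rmin (r / 2) (1 / 2)); pose proof (cond_pos r).
  assert (0 < eta) by (apply Rmin_pos; lra).
  assert (eta <= r / 2) by apply Rmin_l; assert (eta <= 1 / 2) by apply Rmin_r.
  assert (Hb : ball (v1, v2) r (v1 + eta * w1, v2 + eta * w2)).
  { split; simpl; apply ball_R_Rabs;
      [replace (v1 + eta * w1 - v1) with (eta * w1) by ring
      | replace (v2 + eta * w2 - v2) with (eta * w2) by ring];
      rewrite Rabs_mult, (Rabs_pos_eq eta) by lra; nra. }
  specialize (Hr _ Hb); rewrite H0 in Hr by lra.
  change (Rabs (0 - G (v1, v2)) < Rabs (G (v1, v2))) in Hr.
  rewrite Rminus_0_l, Rabs_Ropp in Hr; lra.
Qed.

Section Residuals.

Variables (a : R) (f dl : pt -> R) (m b c d mu : R).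
Hypotheses (f_smooth : smooth_up_to (closedP a) f) (dl_smooth : smooth_up_to (closedP a) dl).
Hypothesis dl_det : forall p, inP a p -> detH a f p * (dl p * lprod a p) = 1.
Hypothesis detH_pos : forall p, inP a p -> 0 < detH a f p.
Hypotheses (ans_pos : ansatz_positive a b c d) (m_pos : 0 < m).
Hypothesis mu_eq : forall p, inP a p -> mu_equation a f m b c d mu p.

Lemma mu_residual_interior p : inP a p -> mu_residual a f m b c d mu dl p = 0.
Proof.
  intros Hp; unfold mu_residual.
  rewrite <- (uinv_sum_adj a f dl), <- (uinv_div_adj a f dl); auto.
  apply mu_equation_reduced; auto; apply Rgt_not_eq, detH_pos; exact Hp.
Qed.

Lemma det_residual_interior p : inP a p -> det_residual a f dl p = 0.
Proof.
  intros Hp; unfold det_residual; rewrite <- lprod_detH; auto.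
  rewrite <- (dl_det p Hp); ring.
Qed.

Ltac solve_continuity_up_to v :=
  repeat match goal with
  | |- continuous (fun q => iter_pd ?w ?g q) _ => apply (smooth_up_to_continuous (closedP a) g w v)
  | |- continuous (fun q => dl q) _ => apply (smooth_up_to_continuous (closedP a) dl [] v)
  | _ => continuity_step
  end.

Lemma mu_residual_continuous v : closedP a v -> continuous (mu_residual a f m b c d mu dl) v.
Proof.
  intros Hv.
  unfold mu_residual, adj_sum, adj_div, ansB, ansD, tcoord, adj11, adj12, adj22,
    adj11_d1, adj12_d1, adj12_d2, adj22_d2, lprod_d1, lprod_d2, lprod, l1, l2, l3, l4, l5.
  solve_continuity_up_to v; auto.
Qed.

Lemma det_residual_continuous v : closedP a v -> continuous (det_residual a f dl) v.
Proof.
  intros Hv; unfold det_residual, lprod_det, lprod, l1, l2, l3, l4, l5.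
  solve_continuity_up_to v; auto.
Qed.

End Residuals.

Ltac unfold_residuals :=
  unfold mu_residual, det_residual, adj_sum, adj_div, lprod_det, adj11, adj12, adj22,
    adj11_d1, adj12_d1, adj12_d2, adj22_d2; unfold_pentagon.

Lemma mu_residual_vertex1 a f m b c d mu dl :
  let v := (-1, -1) in
  mu_residual a f m b c d mu dl v =
  ansD b c d v ^ 2 - b * ansD b c d v * ansB b c v * (dl v * ((a + 1) * a ^ 2))
  - mu * ansB b c v ^ 2.
Proof. intros v; unfold v; unfold_residuals; field. Qed.

Lemma det_residual_vertex1 a f dl :
  let v := (-1, -1) in det_residual a f dl v = / 4 * (dl v * ((a + 1) * a ^ 2)) - 1.
Proof. intros v; unfold v; unfold_residuals; field. Qed.

Lemma mu_residual_vertex2 a f m b c d mu dl :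
  let v := (-1, a - 1) in
  mu_residual a f m b c d mu dl v = ansD b c d v ^ 2 - mu * ansB b c v ^ 2.
Proof. intros v; unfold v; unfold_residuals; field. Qed.

Lemma mu_residual_vertex3 a f m b c d mu dl :
  let v := (0, a - 1) in
  mu_residual a f m b c d mu dl v =
  ansD b c d v ^ 2 + b * ansD b c d v * ansB b c v * (/ 2 * (dl v * (a * (a - 1))))
  - mu * ansB b c v ^ 2.
Proof. intros v; unfold v; unfold_residuals; field. Qed.

Lemma det_residual_vertex3 a f dl :
  let v := (0, a - 1) in det_residual a f dl v = / 4 * (dl v * (a * (a - 1))) - 1.
Proof. intros v; unfold v; unfold_residuals; field. Qed.

Lemma ratio_identity k b B D mu : B <> 0 -> D <> 0 ->
  D ^ 2 - k * b * D * B - mu * B ^ 2 = 0 -> k * b / (B * D) = 1 / B ^ 2 - mu / D ^ 2.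
Proof.
  intros HB HD H.
  replace (k * b / (B * D)) with (k * b * D * B / (B ^ 2 * D ^ 2)) by (field; auto).
  replace (k * b * D * B) with (D ^ 2 - mu * B ^ 2) by lra.
  field; auto.
Qed.

Section Vertices.

Variables (a : R) (f dl : pt -> R) (m b c d mu : R).
Hypothesis a_gt1 : 1 < a.
Hypotheses (f_smooth : smooth_up_to (closedP a) f) (dl_smooth : smooth_up_to (closedP a) dl).
Hypothesis dl_det : forall p, inP a p -> detH a f p * (dl p * lprod a p) = 1.
Hypothesis detH_pos : forall p, inP a p -> 0 < detH a f p.
Hypotheses (ans_pos : ansatz_positive a b c d) (m_pos : 0 < m).
Hypothesis mu_eq : forall p, inP a p -> mu_equation a f m b c d mu p.

Lemma residuals_vanish_at v w : closedP a v -> Rabs (fst w) <= 1 -> Rabs (snd w) <= 1 ->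
  (forall eta, 0 < eta <= 1 / 2 -> inP a (fst v + eta * fst w, snd v + eta * snd w)) ->
  mu_residual a f m b c d mu dl v = 0 /\ det_residual a f dl v = 0.
Proof.
  intros Hv Hw1 Hw2 Hray; split; apply (continuous_zero_along_ray _ v w); auto;
    intros eta Heta.
  - apply mu_residual_continuous; auto.
  - apply mu_residual_interior; auto.
  - apply det_residual_continuous; auto.
  - apply det_residual_interior; auto.
Qed.

Lemma vertex_identity1 :
  4 * b / ((c - 2 * b) * (d * c + 1 - 2 * d * b))
  = 1 / (c - 2 * b) ^ 2 - mu / (d * c + 1 - 2 * d * b) ^ 2.
Proof.
  destruct (residuals_vanish_at (-1, -1) (1, 1)) as [Hmu Hdet];
    try (unfold closedP, inP, l1, l2, l3, l4, l5; simpl; intros; lra);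
    try (apply Rabs_le; simpl; lra).
  rewrite mu_residual_vertex1 in Hmu; rewrite det_residual_vertex1 in Hdet.
  destruct (ans_pos (-1, -1)) as [HB HD]; [unfold closedP, l1, l2, l3, l4, l5; simpl; lra |].
  replace (dl (-1, -1) * ((a + 1) * a ^ 2)) with 4 in Hmu by lra.
  unfold ansB, ansD, tcoord in *; cbn [fst snd] in *.
  apply ratio_identity; try lra; rewrite <- Hmu; ring.
Qed.

Lemma vertex_identity2 :
  0 = 1 / (c + (a - 2) * b) ^ 2 - mu / (d * c + 1 + (a - 2) * d * b) ^ 2.
Proof.
  destruct (residuals_vanish_at (-1, a - 1) (1, -1)) as [Hmu _];
    try (unfold closedP, inP, l1, l2, l3, l4, l5; simpl; intros; lra);
    try (apply Rabs_le; simpl; lra).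
  rewrite mu_residual_vertex2 in Hmu.
  destruct (ans_pos (-1, a - 1)) as [HB HD]; [unfold closedP, l1, l2, l3, l4, l5; simpl; lra |].
  unfold ansB, ansD, tcoord in *; cbn [fst snd] in *.
  transitivity (0 * b / ((c + (a - 2) * b) * (d * c + 1 + (a - 2) * d * b))); [unfold Rdiv; ring |].
  apply ratio_identity; try lra; rewrite <- Hmu; ring.
Qed.

Lemma vertex_identity3 :
  - 2 * b / ((c + (a - 1) * b) * (d * c + 1 + (a - 1) * d * b))
  = 1 / (c + (a - 1) * b) ^ 2 - mu / (d * c + 1 + (a - 1) * d * b) ^ 2.
Proof.
  destruct (residuals_vanish_at (0, a - 1) (-1, -1)) as [Hmu Hdet];
    try (unfold closedP, inP, l1, l2, l3, l4, l5; simpl; intros; lra);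
    try (apply Rabs_le; simpl; lra).
  rewrite mu_residual_vertex3 in Hmu; rewrite det_residual_vertex3 in Hdet.
  destruct (ans_pos (0, a - 1)) as [HB HD]; [unfold closedP, l1, l2, l3, l4, l5; simpl; lra |].
  replace (dl (0, a - 1) * (a * (a - 1))) with 4 in Hmu by lra.
  unfold ansB, ansD, tcoord in *; cbn [fst snd] in *.
  apply ratio_identity; try lra; rewrite <- Hmu; ring.
Qed.

End Vertices.

(** * Integration over the pentagon *)

Definition continuous_on_Icc (g : R -> R) (lo hi : R) : Prop :=
  forall x0, lo <= x0 <= hi -> forall eps : posreal, exists delta : posreal,
    forall x, lo <= x <= hi -> Rabs (x - x0) < delta -> Rabs (g x - g x0) < eps.

Lemma continuous_on_Icc_ext (g1 g2 : R -> R) lo hi :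
  (forall x, lo <= x <= hi -> g1 x = g2 x) ->
  continuous_on_Icc g1 lo hi -> continuous_on_Icc g2 lo hi.
Proof.
  intros He H x0 Hx0 eps; destruct (H x0 Hx0 eps) as [delta Hdelta]; exists delta.
  intros x Hx Hd; rewrite <- !He by auto; apply Hdelta; auto.
Qed.

Lemma continuity_2d_pt_of_continuous (F : pt -> R) x y :
  continuous F (x, y) -> continuity_2d_pt (fun u v => F (u, v)) x y.
Proof.
  intros H; apply continuity_2d_pt_filterlim.
  apply (filterlim_ext F); [intros []; reflexivity | exact H].
Qed.

Lemma continuous_comp_pair {U : UniformSpace} (g1 g2 : U -> R) (F : pt -> R) z :
  continuous g1 z -> continuous g2 z -> continuous F (g1 z, g2 z) ->
  continuous (fun q => F (g1 q, g2 q)) z.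
Proof.
  intros H1 H2 H3; apply (continuous_comp_2 g1 g2 (fun u v => F (u, v))); auto.
  apply (filterlim_ext F); [intros []; reflexivity | exact H3].
Qed.

Lemma continuous_line2 (F : pt -> R) x t : continuous F (x, t) -> continuous (fun s => F (x, s)) t.
Proof.
  intros H; apply (continuous_comp_pair (fun _ => x) (fun s => s) F t); auto.
  - apply continuous_const.
  - apply filterlim_id.
Qed.

Lemma ex_RInt_line2 (F : pt -> R) x lo hi : lo <= hi ->
  (forall t, lo <= t <= hi -> continuous F (x, t)) -> ex_RInt (fun t => F (x, t)) lo hi.
Proof.
  intros Hlh H; apply (ex_RInt_continuous (V := R_CompleteNormedModule)); intros z Hz.
  rewrite Rmin_left, Rmax_right in Hz by lra; apply continuous_line2, H, Hz.
Qed.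

Lemma continuous_on_Icc_RInt_param (G : R -> R -> R) lo hi c d : lo <= hi -> c < d ->
  (forall x s, lo <= x <= hi -> c <= s <= d -> continuity_2d_pt G x s) ->
  continuous_on_Icc (fun x => RInt (fun s => G x s) c d) lo hi.
Proof.
  intros Hlh Hcd H x0 Hx0 eps.
  assert (He : 0 < eps / (2 * (d - c))) by (apply Rdiv_lt_0_compat; [apply cond_pos | lra]).
  destruct (uniform_continuity_2d G lo hi c d H (mkposreal _ He)) as [delta Hdelta].
  exists delta; intros x Hx Hxx0.
  assert (Hex : forall z, lo <= z <= hi -> ex_RInt (fun s => G z s) c d).
  { intros z Hz; apply (ex_RInt_line2 (fun q => G (fst q) (snd q))); [lra |].
    intros t Ht; apply continuity_2d_pt_filterlim, H; auto. }
  rewrite <- (RInt_minus (V := R_CompleteNormedModule)) by auto.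
  eapply Rle_lt_trans.
  - apply (abs_RInt_le_const _ c d (eps / (2 * (d - c)))); [lra | |].
    + apply (ex_RInt_minus (fun s => G x s) (fun s => G x0 s)); auto.
    + intros t Ht; left; apply (Hdelta x0 t x t); auto.
      rewrite Rminus_eq_0, Rabs_R0; apply cond_pos.
  - replace ((d - c) * (eps / (2 * (d - c)))) with (eps / 2) by (field; lra).
    pose proof (cond_pos eps); lra.
Qed.

Definition clamp (lo hi x : R) : R := Rmax lo (Rmin hi x).

Lemma clamp_in lo hi x : lo <= hi -> lo <= clamp lo hi x <= hi.
Proof.
  intros H; unfold clamp; split; [apply Rmax_l | apply Rmax_lub; auto; apply Rmin_l].
Qed.

Lemma clamp_id lo hi x : lo <= x <= hi -> clamp lo hi x = x.
Proof. intros H; unfold clamp; rewrite Rmin_right, Rmax_right; lra. Qed.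

Lemma clamp_lipschitz lo hi x y : lo <= hi ->
  Rabs (clamp lo hi x - clamp lo hi y) <= Rabs (x - y).
Proof.
  intros H; unfold clamp, Rmax, Rmin.
  repeat destruct Rle_dec; unfold Rabs; repeat destruct Rcase_abs; lra.
Qed.

Lemma continuous_clamp (g : R -> R) lo hi : lo <= hi -> continuous_on_Icc g lo hi ->
  forall x, continuous (fun y => g (clamp lo hi y)) x.
Proof.
  intros Hlh Hg x; apply continuity_pt_filterlim; intros eps Heps.
  destruct (Hg (clamp lo hi x) (clamp_in lo hi x Hlh) (mkposreal _ Heps)) as [delta Hdelta].
  exists delta; split; [apply cond_pos |]; intros y [_ Hy]; unfold R_dist in *; simpl in *.
  apply Hdelta; [apply clamp_in; auto |].
  eapply Rle_lt_trans; [apply clamp_lipschitz; auto | exact Hy].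
Qed.

Lemma ex_RInt_continuous_on_Icc (g : R -> R) lo hi : lo < hi ->
  continuous_on_Icc g lo hi -> ex_RInt g lo hi.
Proof.
  intros Hlh H; apply (ex_RInt_ext (fun y => g (clamp lo hi y))).
  - intros x Hx; rewrite Rmin_left, Rmax_right in Hx by lra; rewrite clamp_id; lra.
  - apply (ex_RInt_continuous (V := R_CompleteNormedModule)); intros z _.
    apply continuous_clamp; auto; lra.
Qed.

(** The fundamental theorem of calculus when [K' = J] is only known on the open interval;
    extending [J] and [K] constantly outside [[lo, hi]] reduces it to the mean value theorem. *)
Lemma RInt_derive_interior (K J : R -> R) lo hi : lo < hi ->
  continuous_on_Icc K lo hi -> continuous_on_Icc J lo hi ->
  (forall x, lo < x < hi -> is_derive K x (J x)) -> RInt J lo hi = K hi - K lo.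
Proof.
  intros Hlh HK HJ HD.
  set (Jt := fun y => J (clamp lo hi y)); set (Kt := fun y => K (clamp lo hi y)).
  assert (CJ : forall x, continuous Jt x) by (apply continuous_clamp; auto; lra).
  assert (CK : forall x, continuous Kt x) by (apply continuous_clamp; auto; lra).
  assert (DPsi : forall y, is_derive (fun z => RInt Jt lo z) y (Jt y)).
  { intros y; apply (is_derive_RInt Jt (fun z => RInt Jt lo z) lo y); auto.
    apply filter_forall; intros z; apply (RInt_correct (V := R_CompleteNormedModule)).
    apply (ex_RInt_continuous (V := R_CompleteNormedModule)); auto. }
  set (Phi := fun z => RInt Jt lo z - Kt z).
  destruct (MVT_gen Phi lo hi (fun _ => 0)) as [c0 [_ Hc]].
  - intros x Hx; rewrite Rmin_left, Rmax_right in Hx by lra.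
    replace 0 with (Jt x - J x) by (unfold Jt; rewrite clamp_id by lra; ring).
    apply (is_derive_minus (fun z => RInt Jt lo z) Kt); auto.
    apply (is_derive_ext_loc K); [| apply HD; lra].
    apply locally_R_Rabs.
    exists (mkposreal _ (Rmin_pos _ _ (Rgt_minus _ _ (proj1 Hx)) (Rgt_minus _ _ (proj2 Hx)))).
    simpl; intros y Hy%Rabs_def2; unfold Kt; rewrite clamp_id; auto.
    pose proof (Rmin_l (x - lo) (hi - x)); pose proof (Rmin_r (x - lo) (hi - x)); lra.
  - intros x _; apply continuity_pt_minus; apply continuity_pt_filterlim; [| apply CK].
    apply (ex_derive_continuous (V := R_NormedModule) (fun z => RInt Jt lo z)).
    eexists; apply DPsi.
  - unfold Phi, Kt in Hc; rewrite RInt_point, !clamp_id in Hc by lra.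
    rewrite <- (RInt_ext Jt J lo hi).
    + simpl in Hc; unfold zero in Hc; simpl in Hc; lra.
    + intros x Hx; rewrite Rmin_left, Rmax_right in Hx by lra; unfold Jt; rewrite clamp_id; lra.
Qed.

Section PentagonDivergence.

Variables (a : R) (Om : pt -> Prop) (V1 E1 V2 E2 Ig : pt -> R).
Hypothesis a_gt1 : 1 < a.
Hypotheses (Om_open : open Om) (closedP_Om : forall q, closedP a q -> Om q).
Hypothesis V1_derive : forall q, Om q -> is_derive (fun s => V1 (s, snd q)) (fst q) (E1 q).
Hypothesis V2_derive : forall q, Om q -> is_derive (fun s => V2 (fst q, s)) (snd q) (E2 q).
Hypotheses (V1_cont : forall q, Om q -> continuous V1 q)
           (E1_cont : forall q, Om q -> continuous E1 q)
           (E2_cont : forall q, Om q -> continuous E2 q)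
           (Ig_cont : forall q, Om q -> continuous Ig q).
Hypothesis Ig_div : forall q, inP a q -> Ig q = E1 q + E2 q.
Hypotheses (V1_left : forall t, V1 (-1, t) = 0) (V1_right : forall t, V1 (a - 1, t) = 0)
           (V1_diag : forall x, V1 (x, a - 1 - x) = 0).
Hypotheses (V2_bottom : forall x, V2 (x, -1) = 0) (V2_top : forall x, V2 (x, a - 1) = 0)
           (V2_diag : forall x, V2 (x, a - 1 - x) = 0).

Lemma Om_box q : Om q -> exists r : posreal, forall u v,
  Rabs (u - fst q) < r -> Rabs (v - snd q) < r -> Om (u, v).
Proof. destruct q; intros Hq; apply locally_pt_box, Om_open, Hq. Qed.

Ltac in_pentagon := unfold closedP, inP, l1, l2, l3, l4, l5; simpl; lra.

Lemma Om_tube_left x : -1 < x < 0 ->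
  exists r : posreal, forall y t, Rabs (y - x) < r -> -1 <= t <= a - 1 + r -> Om (y, t).
Proof.
  intros Hx; destruct (Om_box (x, a - 1)) as [r0 Hr0]; [apply closedP_Om; in_pentagon |].
  simpl in Hr0; pose proof (cond_pos r0).
  set (r := Rmin (r0 / 2) (Rmin (x + 1) (- x))).
  assert (Hr : 0 < r) by (unfold r; repeat apply Rmin_pos; lra).
  assert (r <= r0 / 2 /\ r <= x + 1 /\ r <= - x) as (? & ? & ?).
  { unfold r; repeat split; [apply Rmin_l | |];
      (eapply Rle_trans; [apply Rmin_r | first [apply Rmin_l | apply Rmin_r]]). }
  exists (mkposreal r Hr); simpl; intros y t Hy%Rabs_def2 Ht.
  destruct (Rle_dec t (a - 1)).
  - apply closedP_Om; in_pentagon.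
  - apply Hr0; apply Rabs_def1; lra.
Qed.

Lemma Om_tube_right x : 0 < x < a - 1 ->
  exists r : posreal, forall y t, Rabs (y - x) < r -> -1 <= t <= a - 1 - x + r -> Om (y, t).
Proof.
  intros Hx; destruct (Om_box (x, a - 1 - x)) as [r0 Hr0]; [apply closedP_Om; in_pentagon |].
  simpl in Hr0; pose proof (cond_pos r0).
  set (r := Rmin (r0 / 2) (Rmin (x / 2) ((a - 1 - x) / 2))).
  assert (Hr : 0 < r) by (unfold r; repeat apply Rmin_pos; lra).
  assert (r <= r0 / 2 /\ r <= x / 2 /\ r <= (a - 1 - x) / 2) as (? & ? & ?).
  { unfold r; repeat split; [apply Rmin_l | |];
      (eapply Rle_trans; [apply Rmin_r | first [apply Rmin_l | apply Rmin_r]]). }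
  exists (mkposreal r Hr); simpl; intros y t Hy%Rabs_def2 Ht.
  destruct (Rle_dec t (a - 1 - y)).
  - apply closedP_Om; in_pentagon.
  - apply Hr0; apply Rabs_def1; lra.
Qed.

Lemma Derive_V1 y t : Om (y, t) -> Derive (fun u => V1 (u, t)) y = E1 (y, t).
Proof. intros Hq; apply is_derive_unique, (V1_derive (y, t) Hq). Qed.

Lemma continuity_2d_Derive_V1 x t : Om (x, t) ->
  continuity_2d_pt (fun u v => Derive (fun z => V1 (z, v)) u) x t.
Proof.
  intros Hq; destruct (Om_box _ Hq) as [r Hr].
  apply (continuity_2d_pt_ext_loc (fun u v => E1 (u, v))).
  - exists r; intros u v Hu Hv; symmetry; apply Derive_V1, Hr; auto.
  - apply continuity_2d_pt_of_continuous, E1_cont, Hq.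
Qed.

Lemma RInt_E2_fibre x lo hi : lo <= hi -> (forall t, lo <= t <= hi -> Om (x, t)) ->
  RInt (fun t => E2 (x, t)) lo hi = V2 (x, hi) - V2 (x, lo).
Proof.
  intros Hlh Ht; apply is_RInt_unique, (is_RInt_derive (fun t => V2 (x, t))).
  - intros t Ht'; rewrite Rmin_left, Rmax_right in Ht' by lra; apply (V2_derive (x, t)), Ht, Ht'.
  - intros t Ht'; rewrite Rmin_left, Rmax_right in Ht' by lra.
    apply continuous_line2, E2_cont, Ht, Ht'.
Qed.

Lemma RInt_Ig_fibre x hx : -1 <= hx ->
  (forall t, -1 <= t <= hx -> Om (x, t)) -> (forall t, -1 < t < hx -> inP a (x, t)) ->
  V2 (x, hx) = 0 ->
  RInt (fun t => Ig (x, t)) (-1) hx = RInt (fun t => E1 (x, t)) (-1) hx.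
Proof.
  intros Hhx Hom Hin HV2.
  rewrite (RInt_ext (fun t => Ig (x, t)) (fun t => E1 (x, t) + E2 (x, t))).
  2: { intros t Ht; rewrite Rmin_left, Rmax_right in Ht by lra; apply Ig_div, Hin; lra. }
  rewrite (RInt_plus (V := R_CompleteNormedModule)), RInt_E2_fibre, HV2, V2_bottom; auto;
    try (apply ex_RInt_line2; auto).
  rewrite Rminus_0_r; apply (plus_zero_r (G := R_AbelianGroup)).
Qed.

Lemma derive_fibre_integral_left x : -1 < x < 0 ->
  is_derive (fun y => RInt (fun t => V1 (y, t)) (-1) (Rmin (a - 1) (a - 1 - y))) x
    (RInt (fun t => Ig (x, t)) (-1) (Rmin (a - 1) (a - 1 - x))).
Proof.
  intros Hx; destruct (Om_tube_left x Hx) as [r Hr]; pose proof (cond_pos r).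
  rewrite Rmin_left by lra.
  apply (is_derive_ext_loc (fun y => RInt (fun t => V1 (y, t)) (-1) (a - 1))).
  { apply locally_R_Rabs; exists (mkposreal _ (Ropp_0_gt_lt_contravar _ (proj2 Hx))); simpl.
    intros y Hy%Rabs_def2; rewrite Rmin_left by lra; reflexivity. }
  rewrite RInt_Ig_fibre; [| lra | intros t Ht; apply closedP_Om; in_pentagon
                        | intros t Ht; in_pentagon | apply V2_top].
  rewrite <- (RInt_ext (fun t => Derive (fun u => V1 (u, t)) x)).
  2: { intros t Ht; rewrite Rmin_left, Rmax_right in Ht by lra.
       apply Derive_V1, closedP_Om; in_pentagon. }
  apply (is_derive_RInt_param (fun u t => V1 (u, t))).
  - apply locally_R_Rabs; exists r; intros y Hy t Ht.
    rewrite Rmin_left, Rmax_right in Ht by lra.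
    eexists; apply (V1_derive (y, t)), Hr; auto; lra.
  - intros t Ht; rewrite Rmin_left, Rmax_right in Ht by lra.
    apply continuity_2d_Derive_V1, closedP_Om; in_pentagon.
  - apply locally_R_Rabs; exists r; intros y Hy.
    apply ex_RInt_line2; [lra |]; intros t Ht; apply V1_cont, Hr; auto; lra.
Qed.

Lemma derive_fibre_integral_right x : 0 < x < a - 1 ->
  is_derive (fun y => RInt (fun t => V1 (y, t)) (-1) (Rmin (a - 1) (a - 1 - y))) x
    (RInt (fun t => Ig (x, t)) (-1) (Rmin (a - 1) (a - 1 - x))).
Proof.
  intros Hx; destruct (Om_tube_right x Hx) as [r Hr]; pose proof (cond_pos r).
  assert (Hq : Om (x, a - 1 - x)) by (apply closedP_Om; in_pentagon).
  rewrite Rmin_right by lra.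
  apply (is_derive_ext_loc (fun y => RInt (fun t => V1 (y, t)) (-1) (a - 1 - y))).
  { apply locally_R_Rabs; exists (mkposreal _ (proj1 Hx)); simpl.
    intros y Hy%Rabs_def2; rewrite Rmin_right by lra; reflexivity. }
  rewrite RInt_Ig_fibre; [| lra | intros t Ht; apply closedP_Om; in_pentagon
                        | intros t Ht; in_pentagon | apply V2_diag].
  rewrite <- (RInt_ext (fun t => Derive (fun u => V1 (u, t)) x)).
  2: { intros t Ht; rewrite Rmin_left, Rmax_right in Ht by lra.
       apply Derive_V1, closedP_Om; in_pentagon. }
  set (eps := Rmin (r / 2) ((a - 1 - x) / 2)).
  assert (He : 0 < eps) by (unfold eps; apply Rmin_pos; lra).
  assert (eps <= r / 2) by apply Rmin_l; assert (eps <= (a - 1 - x) / 2) by apply Rmin_r.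
  (* Leibniz rule with moving upper limit; its boundary term vanishes because [V1 = 0] on the
     diagonal edge. *)
  replace (RInt (fun t => Derive (fun u => V1 (u, t)) x) (-1) (a - 1 - x)) with
    (RInt (fun t => Derive (fun u => V1 (u, t)) x) (-1) (a - 1 - x) + V1 (x, a - 1 - x) * (-1))
    by (rewrite V1_diag; ring).
  apply (is_derive_RInt_param_bound_comp_aux3 (fun u t => V1 (u, t)) (-1) (fun u => a - 1 - u)).
  - apply locally_R_Rabs; exists r; intros y Hy.
    apply ex_RInt_line2; [lra |]; intros t Ht; apply V1_cont, Hr; auto; lra.
  - exists (mkposreal _ He); apply locally_R_Rabs; exists r; intros y Hy; simpl.
    apply ex_RInt_line2; [lra |]; intros t Ht; apply V1_cont, Hr; auto; lra.
  - auto_derive; auto; ring.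
  - exists (mkposreal _ He); apply locally_R_Rabs; exists r; intros y Hy t Ht; simpl in Ht.
    rewrite Rmin_left, Rmax_right in Ht by lra.
    eexists; apply (V1_derive (y, t)), Hr; auto; lra.
  - intros t Ht; rewrite Rmin_left, Rmax_right in Ht by lra.
    apply continuity_2d_Derive_V1, closedP_Om; in_pentagon.
  - destruct (Om_box _ Hq) as [r1 Hr1]; exists r1; intros u v Hu Hv.
    apply continuity_2d_Derive_V1, Hr1; auto.
  - apply continuity_pt_filterlim, continuous_line2, V1_cont, Hq.
Qed.

Lemma continuous_on_Icc_fibre_left (G : pt -> R) : (forall q, Om q -> continuous G q) ->
  continuous_on_Icc (fun x => RInt (fun t => G (x, t)) (-1) (Rmin (a - 1) (a - 1 - x))) (-1) 0.
Proof.
  intros HG; apply (continuous_on_Icc_ext (fun x => RInt (fun t => G (x, t)) (-1) (a - 1))).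
  { intros x Hx; rewrite Rmin_left by lra; reflexivity. }
  apply (continuous_on_Icc_RInt_param (fun x t => G (x, t))); try lra.
  intros x s Hx Hs; apply continuity_2d_pt_of_continuous, HG, closedP_Om; in_pentagon.
Qed.

(** On the right part the fibre [[-1, a - 1 - x]] moves with [x]; rescaling it to [[0, 1]]
    puts the integral in parametric form. *)
Lemma continuous_on_Icc_fibre_right (G : pt -> R) : (forall q, Om q -> continuous G q) ->
  continuous_on_Icc (fun x => RInt (fun t => G (x, t)) (-1) (Rmin (a - 1) (a - 1 - x))) 0 (a - 1).
Proof.
  intros HG.
  apply (continuous_on_Icc_ext (fun x => RInt (fun s => (a - x) * G (x, (a - x) * s + -1)) 0 1)).
  { intros x Hx; rewrite Rmin_right by lra.
    rewrite (RInt_comp_lin (V := R_CompleteNormedModule) (fun t => G (x, t))).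
    - f_equal; ring.
    - replace ((a - x) * 0 + -1) with (-1) by ring; replace ((a - x) * 1 + -1) with (a - 1 - x) by ring.
      apply ex_RInt_line2; [lra |]; intros t Ht; apply HG, closedP_Om; in_pentagon. }
  apply (continuous_on_Icc_RInt_param (fun x s => (a - x) * G (x, (a - x) * s + -1))); try lra.
  intros x s Hx Hs.
  apply (continuity_2d_pt_of_continuous (fun z => (a - fst z) * G (fst z, (a - fst z) * snd z + -1))).
  apply (continuous_Rmult (fun z => a - fst z) (fun z => G (fst z, (a - fst z) * snd z + -1))).
  - repeat continuity_step.
  - apply (continuous_comp_pair (fun z => fst z) (fun z => (a - fst z) * snd z + -1) G);
      [repeat continuity_step | repeat continuity_step |].
    apply HG, closedP_Om; unfold closedP, l1, l2, l3, l4, l5; simpl; nra.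
Qed.

Lemma RInt_zero (g : R -> R) lo hi : (forall t, g t = 0) -> RInt g lo hi = 0.
Proof.
  intros H; rewrite (RInt_ext g (fun _ => 0)) by auto.
  rewrite RInt_const; apply Rmult_0_r.
Qed.

Theorem RInt_pentagon_divergence :
  RInt (fun x => RInt (fun t => Ig (x, t)) (-1) (Rmin (a - 1) (a - 1 - x))) (-1) (a - 1) = 0.
Proof.
  set (K := fun y => RInt (fun t => V1 (y, t)) (-1) (Rmin (a - 1) (a - 1 - y))).
  set (J := fun x => RInt (fun t => Ig (x, t)) (-1) (Rmin (a - 1) (a - 1 - x))).
  assert (HJl : continuous_on_Icc J (-1) 0) by apply continuous_on_Icc_fibre_left, Ig_cont.
  assert (HJr : continuous_on_Icc J 0 (a - 1)) by apply continuous_on_Icc_fibre_right, Ig_cont.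
  rewrite <- (RInt_Chasles J (-1) 0 (a - 1));
    try (apply ex_RInt_continuous_on_Icc; auto; lra).
  assert (HKl : continuous_on_Icc K (-1) 0) by apply continuous_on_Icc_fibre_left, V1_cont.
  assert (HKr : continuous_on_Icc K 0 (a - 1)) by apply continuous_on_Icc_fibre_right, V1_cont.
  rewrite (RInt_derive_interior K J (-1) 0), (RInt_derive_interior K J 0 (a - 1)); auto; try lra.
  - assert (K (-1) = 0) by (apply RInt_zero; auto).
    assert (K (a - 1) = 0) by (apply RInt_zero; auto).
    change (K 0 - K (-1) + (K (a - 1) - K 0) = 0); lra.
  - intros x Hx; apply derive_fibre_integral_right; lra.
  - intros x Hx; apply derive_fibre_integral_left; lra.
Qed.

End PentagonDivergence.

(** * The integrand as a divergence *)

(** [flux_weight = b D^(m-1) B^(-m-3)]; the flux [flux_weight * (u^11 + u^12, u^12 + u^22)]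
    has divergence [integrand] by the [mu]-equation, and is tangent to the boundary. *)
Definition flux_weight (m b c d : R) (q : pt) : R :=
  b * exp ((m - 1) * ln (ansD b c d q) - (m + 3) * ln (ansB b c q)).
Definition flux_weight_d (m b c d : R) (q : pt) : R :=
  flux_weight m b c d q * ((m - 1) * d * b / ansD b c d q - (m + 3) * b / ansB b c q).

Definition flux1 (a : R) (f : pt -> R) (m b c d : R) (dl : pt -> R) (q : pt) : R :=
  flux_weight m b c d q * (dl q * (adj11 a f q + adj12 a f q)).
Definition flux2 (a : R) (f : pt -> R) (m b c d : R) (dl : pt -> R) (q : pt) : R :=
  flux_weight m b c d q * (dl q * (adj12 a f q + adj22 a f q)).
Definition flux1_d1 (a : R) (f : pt -> R) (m b c d : R) (dl : pt -> R) (q : pt) : R :=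
  flux_weight_d m b c d q * (dl q * (adj11 a f q + adj12 a f q))
  + flux_weight m b c d q * (iter_pd [true] dl q * (adj11 a f q + adj12 a f q)
                             + dl q * (adj11_d1 a f q + adj12_d1 a f q)).
Definition flux2_d2 (a : R) (f : pt -> R) (m b c d : R) (dl : pt -> R) (q : pt) : R :=
  flux_weight_d m b c d q * (dl q * (adj12 a f q + adj22 a f q))
  + flux_weight m b c d q * (iter_pd [false] dl q * (adj12 a f q + adj22 a f q)
                             + dl q * (adj12_d2 a f q + adj22_d2 a f q)).

Definition integrand (m b c d mu : R) (q : pt) : R :=
  (exp (- phi_ans m b c d q) - mu * exp ((2 / m - 1) * phi_ans m b c d q))
  * exp (4 * sigma_ans b c q).

Definition flux_domain (b c d : R) (Uf Ud : pt -> Prop) (q : pt) : Prop :=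
  Uf q /\ Ud q /\ 0 < ansB b c q /\ 0 < ansD b c d q.

Lemma continuous_ansB b c q : continuous (ansB b c) q.
Proof. unfold ansB, tcoord; repeat continuity_step. Qed.

Lemma continuous_ansD b c d q : continuous (ansD b c d) q.
Proof. unfold ansD, tcoord; repeat continuity_step. Qed.

Lemma flux_domain_open b c d Uf Ud : open Uf -> open Ud -> open (flux_domain b c d Uf Ud).
Proof.
  intros HUf HUd; repeat apply open_and; auto;
    apply (open_comp _ (fun y => 0 < y)); try apply open_gt; intros q _;
    [apply continuous_ansB | apply continuous_ansD].
Qed.

Lemma is_derive_flux_weight_d1 m b c d x y :
  0 < ansB b c (x, y) -> 0 < ansD b c d (x, y) ->
  is_derive (fun s => flux_weight m b c d (s, y)) x (flux_weight_d m b c d (x, y)).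
Proof.
  unfold flux_weight_d, flux_weight, ansD, ansB, tcoord; cbn [fst snd]; intros HB HD.
  auto_derive; [repeat split; lra | unfold Rminus; field; lra].
Qed.

Lemma is_derive_flux_weight_d2 m b c d x y :
  0 < ansB b c (x, y) -> 0 < ansD b c d (x, y) ->
  is_derive (fun s => flux_weight m b c d (x, s)) y (flux_weight_d m b c d (x, y)).
Proof.
  unfold flux_weight_d, flux_weight, ansD, ansB, tcoord; cbn [fst snd]; intros HB HD.
  auto_derive; [repeat split; lra | unfold Rminus; field; lra].
Qed.

Lemma is_derive_mult3 (A B C D : R -> R) x dA dB dC dD :
  is_derive A x dA -> is_derive B x dB -> is_derive C x dC -> is_derive D x dD ->
  is_derive (fun s => A s * (B s * (C s + D s))) x
    (dA * (B x * (C x + D x)) + A x * (dB * (C x + D x) + B x * (dC + dD))).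
Proof.
  intros HA HB HC HD.
  pose proof (is_derive_plus C D x dC dD HC HD) as HCD.
  pose proof (is_derive_mult B _ x dB _ HB HCD Rmult_comm) as HBCD.
  exact (is_derive_mult A _ x dA _ HA HBCD Rmult_comm).
Qed.

Section Flux.

Variables (a : R) (f dl : pt -> R) (m b c d mu : R) (Uf Ud : pt -> Prop).
Hypotheses (f_smooth : smooth_on Uf f) (dl_smooth : smooth_on Ud dl).

Lemma is_derive_flux1 x y : flux_domain b c d Uf Ud (x, y) ->
  is_derive (fun s => flux1 a f m b c d dl (s, y)) x (flux1_d1 a f m b c d dl (x, y)).
Proof.
  intros (H1 & H2 & H3 & H4); apply is_derive_mult3.
  - apply is_derive_flux_weight_d1; auto.
  - apply Derive_correct, (smooth_on_ex_derive1 Ud dl []); auto.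
  - apply (is_derive_adj11_d1 Uf); auto.
  - apply (is_derive_adj12_d1 Uf); auto.
Qed.

Lemma is_derive_flux2 x y : flux_domain b c d Uf Ud (x, y) ->
  is_derive (fun s => flux2 a f m b c d dl (x, s)) y (flux2_d2 a f m b c d dl (x, y)).
Proof.
  intros (H1 & H2 & H3 & H4); apply is_derive_mult3.
  - apply is_derive_flux_weight_d2; auto.
  - apply Derive_correct, (smooth_on_ex_derive2 Ud dl []); auto.
  - apply (is_derive_adj12_d2 Uf); auto.
  - apply (is_derive_adj22_d2 Uf); auto.
Qed.

Lemma flux_continuous q : 0 < m -> flux_domain b c d Uf Ud q ->
  continuous (flux1 a f m b c d dl) q /\ continuous (flux1_d1 a f m b c d dl) q /\
  continuous (flux2_d2 a f m b c d dl) q /\ continuous (integrand m b c d mu) q.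
Proof.
  intros Hm (H1 & H2 & H3 & H4); unfold ansB, ansD, tcoord in H3, H4.
  assert (0 < (d * b * (fst q + snd q) + d * c + 1) / (b * (fst q + snd q) + c))
    by (apply Rdiv_lt_0_compat; auto).
  unfold flux1, flux1_d1, flux2_d2, integrand, flux_weight_d, flux_weight, phi_ans, sigma_ans,
    ansD, ansB, tcoord, adj11, adj12, adj22, adj11_d1, adj12_d1, adj12_d2, adj22_d2.
  unfold_pentagon.
  repeat split; repeat match goal with
    | |- continuous (fun q => iter_pd ?w f q) _ => apply (smooth_on_continuous Uf f w q)
    | |- continuous (fun q => iter_pd ?w dl q) _ => apply (smooth_on_continuous Ud dl w q)
    | |- continuous (fun q => dl q) _ => apply (smooth_on_continuous Ud dl [] q)
    | _ => continuity_step
    end; cbv beta; auto; lra.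
Qed.

End Flux.

Lemma integrand_weight m b c d mu q : 0 < m -> 0 < ansB b c q -> 0 < ansD b c d q ->
  integrand m b c d mu q =
  exp ((m - 1) * ln (ansD b c d q) - (m + 3) * ln (ansB b c q))
  * (ansD b c d q / ansB b c q - mu * (ansB b c q / ansD b c d q)).
Proof.
  intros Hm HB HD; unfold integrand, phi_ans, sigma_ans; fold (ansB b c q) (ansD b c d q).
  rewrite ln_div by auto.
  set (LD := ln (ansD b c d q)); set (LB := ln (ansB b c q)).
  assert (Hq : forall u v, exp (u - v) = exp u / exp v)
    by (intros; unfold Rminus, Rdiv; rewrite exp_plus, exp_Ropp; reflexivity).
  replace (ansD b c d q / ansB b c q) with (exp (LD - LB)) by (rewrite Hq; unfold LD, LB; rewrite !exp_ln; auto).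
  replace (ansB b c q / ansD b c d q) with (exp (LB - LD)) by (rewrite Hq; unfold LD, LB; rewrite !exp_ln; auto).
  rewrite Rmult_minus_distr_r, Rmult_assoc, <- !exp_plus.
  match goal with |- exp ?u - mu * exp ?v = _ =>
    replace u with ((m - 1) * LD - (m + 3) * LB + (LD - LB)) by ring;
    replace v with ((m - 1) * LD - (m + 3) * LB + (LB - LD)) by (field; lra) end.
  rewrite !exp_plus; ring.
Qed.

Section Divergence.

Variables (a : R) (f dl : pt -> R) (m b c d mu : R).
Hypotheses (f_smooth : smooth_up_to (closedP a) f) (dl_smooth : smooth_up_to (closedP a) dl).
Hypothesis dl_det : forall p, inP a p -> detH a f p * (dl p * lprod a p) = 1.
Hypothesis detH_pos : forall p, inP a p -> 0 < detH a f p.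
Hypotheses (ans_pos : ansatz_positive a b c d) (m_pos : 0 < m).
Hypothesis mu_eq : forall p, inP a p -> mu_equation a f m b c d mu p.
Hypothesis a_gt1 : 1 < a.

Lemma integrand_divergence q : inP a q ->
  integrand m b c d mu q = flux1_d1 a f m b c d dl q + flux2_d2 a f m b c d dl q.
Proof.
  intros Hq; pose proof (mu_residual_interior a f dl m b c d mu
    f_smooth dl_smooth dl_det detH_pos ans_pos m_pos mu_eq q Hq) as Hres.
  destruct (ans_pos q (inP_closedP a q Hq)) as [HB HD].
  replace (flux1_d1 a f m b c d dl q + flux2_d2 a f m b c d dl q) with
    (flux_weight_d m b c d q * adj_sum a f dl q + flux_weight m b c d q * adj_div a f dl q)
    by (unfold flux1_d1, flux2_d2, adj_sum, adj_div; ring).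
  rewrite integrand_weight by auto; unfold flux_weight_d, flux_weight, mu_residual in *.
  rewrite ansD_ansB in *; set (B := ansB b c q) in *.
  set (X := exp ((m - 1) * ln (d * B + 1) - (m + 3) * ln B)).
  set (SW := adj_sum a f dl q) in *; set (S := adj_div a f dl q) in *.
  replace mu with (((d * B + 1) ^ 2 + (b ^ 2 * (d * B + (d * B + 1)) + 2 * b ^ 2 * (d * B + 1)
                    + m * b ^ 2) * SW - b * (d * B + 1) * B * S) / B ^ 2)
    by (field_simplify_eq; lra).
  field; lra.
Qed.

Theorem integral_identity :
  RInt (fun x1 => RInt (fun x2 => integrand m b c d mu (x1, x2))
                       (-1) (Rmin (a - 1) (a - 1 - x1))) (-1) (a - 1) = 0.
Proof.
  destruct f_smooth as (Uf & HUf & HcUf & Hsf), dl_smooth as (Ud & HUd & HcUd & Hsd).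
  pose proof (fun q Hq => flux_continuous a f dl m b c d mu Uf Ud Hsf Hsd q m_pos Hq) as Hcont.
  apply (RInt_pentagon_divergence a (flux_domain b c d Uf Ud) (flux1 a f m b c d dl)
           (flux1_d1 a f m b c d dl) (flux2 a f m b c d dl) (flux2_d2 a f m b c d dl)).
  - exact a_gt1.
  - apply flux_domain_open; auto.
  - intros q Hq; destruct (ans_pos q Hq); repeat split; auto.
  - intros [x y] Hq; apply (is_derive_flux1 a f dl m b c d Uf Ud); auto.
  - intros [x y] Hq; apply (is_derive_flux2 a f dl m b c d Uf Ud); auto.
  - intros q Hq; apply (Hcont q Hq).
  - intros q Hq; apply (Hcont q Hq).
  - intros q Hq; apply (Hcont q Hq).
  - intros q Hq; apply (Hcont q Hq).
  - apply integrand_divergence.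
  all: intros; unfold flux1, flux2, adj11, adj12, adj22; unfold_pentagon; ring.
Qed.

End Divergence.

Theorem proposition4p3 :
  forall (a m b c d mu : R) (f : pt -> R),
    1 < a -> 0 < m ->
    (* g_K : T^2 x Z_2-invariant toric Kaehler metric on the pentagon *)
    smooth_up_to (closedP a) f ->
    (forall p : pt, closedP a p -> f (snd p, fst p) = f p) ->
    (forall p : pt, inP a p -> 0 < u11 a f p /\ 0 < detH a f p) ->
    (exists delta : pt -> R,
        smooth_up_to (closedP a) delta /\
        (forall p : pt, closedP a p -> 0 < delta p) /\
        (forall p : pt, inP a p -> detH a f p * (delta p * lprod a p) = 1)) ->
    (* positivity of the ansatz on the closed polytope *)
    (forall p : pt, closedP a p ->
        0 < b * tcoord p + c /\ 0 < d * b * tcoord p + d * c + 1) ->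
    (* (g, phi) quasi-Einstein, g = e^{2 sigma} g_K *)
    (exists lam : R,
        quasi_einstein_on (inP a)
          (confg (sigma_ans b c) (gK a f)) (confginv (sigma_ans b c) (gKinv a f))
          (phi_ans m b c d) lam m) ->
    (* the constant mu *)
    (forall p : pt, inP a p ->
        1 - / m * (laplacian (confg (sigma_ans b c) (gK a f))
                             (confginv (sigma_ans b c) (gKinv a f)) (phi_ans m b c d) p
                   - gradsq (confginv (sigma_ans b c) (gKinv a f)) (phi_ans m b c d) p)
        = mu * exp (2 * phi_ans m b c d p / m)) ->
    4 * b / ((c - 2 * b) * (d * c + 1 - 2 * d * b))
      = 1 / (c - 2 * b) ^ 2 - mu / (d * c + 1 - 2 * d * b) ^ 2
    /\ 0 = 1 / (c + (a - 2) * b) ^ 2 - mu / (d * c + 1 + (a - 2) * d * b) ^ 2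
    /\ - 2 * b / ((c + (a - 1) * b) * (d * c + 1 + (a - 1) * d * b))
      = 1 / (c + (a - 1) * b) ^ 2 - mu / (d * c + 1 + (a - 1) * d * b) ^ 2
    /\ RInt (fun x1 =>
          RInt (fun x2 =>
              (exp (- phi_ans m b c d (x1, x2))
               - mu * exp ((2 / m - 1) * phi_ans m b c d (x1, x2)))
              * exp (4 * sigma_ans b c (x1, x2)))
            (-1) (Rmin (a - 1) (a - 1 - x1)))
         (-1) (a - 1) = 0.
Proof.
  intros a m b c d mu f Ha Hm Hf _ Hpd (dl & Hdl & _ & Hdet) Hpos _ Hmu.
  assert (HdetH : forall p, inP a p -> 0 < detH a f p) by (intros p Hp; apply Hpd, Hp).
  split; [| split; [| split]].
  - apply (vertex_identity1 a f dl m b c d mu); auto.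
  - apply (vertex_identity2 a f dl m b c d mu); auto.
  - apply (vertex_identity3 a f dl m b c d mu); auto.
  - apply (integral_identity a f dl m b c d mu); auto.
Qed.
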